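(* Let $N\ge1$. For $\alpha\in(-1,1)$ let $\lambda^{(N)}_0(\alpha)<\lambda^{(N)}_1(\alpha)<\dots<\lambda^{(N)}_N(\alpha)$ be the zeros of $\tilde\phi_{N+1}$ (equivalently the eigenvalues of $\tilde{\mathbf M}$). Then: (1) for each $k=0,\dots,N$, $\dfrac{\partial\lambda^{(N)}_k}{\partial\alpha}(\alpha)<0$ for all $\alpha\in(-1,1)$; (2) $\lambda^{(N)}_k<\lambda^{(N-1)}_k<\lambda^{(N)}_{k+1}$ for $k=0,\dots,N-1$ (where $\lambda^{(N-1)}_k$ are the zeros of $\tilde\phi_N$); (3) $\lambda^{(N)}_0<\dfrac{\int_{-1}^1\mu\,\omega\,d\mu}{\int_{-1}^1\omega\,d\mu}<\lambda^{(N)}_N$; in particular $\lambda^{(N)}_0<E_1/E_0<\lambda^{(N)}_N$ for the ansatz moments described below.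
   Context: For a parameter $\alpha\in(-1,1)$ define on $[-1,1]$ the weights $\omega(\mu)=(1+\alpha\mu)^{-4}$ and $\tilde\omega(\mu)=(1+\alpha\mu)^{-5}$. Let $\{\phi_k\}_{k\ge0}$ (resp. $\{\tilde\phi_k\}_{k\ge0}$) be the monic orthogonal polynomials on $[-1,1]$ with respect to $\omega$ (resp. $\tilde\omega$); their coefficients depend smoothly on $\alpha$. Let $\tilde K_{k,k}=\int_{-1}^1\tilde\phi_k^2\tilde\omega\,d\mu$, $\tilde{\boldsymbol\Lambda}=\mathrm{diag}(\tilde K_{0,0},\dots,\tilde K_{N,N})$ and $\tilde{\mathbf M}=\tilde{\boldsymbol\Lambda}^{-1}\mathbf G$ with $G_{i,j}=\int_{-1}^1\mu\,\tilde\phi_i\tilde\phi_j\,\tilde\omega\,d\mu$, $0\le i,j\le N$. The ansatz is $\hat I(\mu)=\sum_{i=0}^N f_i\,\omega(\mu)\phi_i(\mu)$ with $f_0\neq0$ and $f_1=0$, and its moments are $E_k=\int_{-1}^1\mu^k\hat I\,d\mu$; for such an ansatz $E_1/E_0=\int_{-1}^1\mu\,\omega\,d\mu\big/\int_{-1}^1\omega\,d\mu$. *)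

From Stdlib Require Import Reals Lra Lia.
Open Scope R_scope.

Definition omega (a mu : R) : R := / (1 + a * mu) ^ 4.
Definition omegat (a mu : R) : R := / (1 + a * mu) ^ 5.

(* "the Riemann integral of f over [lo,hi] exists and equals l"
   (RiemannInt does not depend on the integrability proof). *)
Definition RInt_eq (f : R -> R) (lo hi l : R) : Prop :=
  exists pr : Riemann_integrable f lo hi, RiemannInt pr = l.

Fixpoint psum (c : nat -> R) (n : nat) (x : R) : R :=
  match n with
  | O => 0
  | S m => psum c m x + c m * x ^ m
  end.

Definition monic_poly (n : nat) (p : R -> R) : Prop :=
  exists c : nat -> R, forall x, p x = x ^ n + psum c n x.

Definition monic_orth_poly (wt : R -> R) (n : nat) (p : R -> R) : Prop :=
  monic_poly n p /\
  forall j : nat, (j < n)%nat ->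
    RInt_eq (fun mu => p mu * mu ^ j * wt mu) (-1) 1 0.

Definition sorted_zeros (p : R -> R) (n : nat) (z : nat -> R) : Prop :=
  (forall k : nat, (k < n)%nat -> z k < z (S k)) /\
  (forall k : nat, (k <= n)%nat -> p (z k) = 0) /\
  (forall x : R, p x = 0 -> exists k : nat, (k <= n)%nat /\ x = z k).

From Stdlib Require Import Reals Lra Lia Psatz ClassicalEpsilon.
From Coquelicot Require Import Coquelicot.
Open Scope R_scope.

(* Everything rests on a Christoffel-type identity: if [P = (x - x0) l] is the monic
   orthogonal polynomial of degree [N + 1] for a positive weight [w], then
   [int f l w = f x0 * int l w] for [deg f <= N], and [l x0 * int l w = int l^2 w > 0].
   Taking [f] the orthogonal polynomial of degree [N] shows that it has the sign of
   [l x0 = P'(x0)] at every zero [x0] of [P]; these signs alternate, whence interlacing.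
   Since [omega = (1 + a x) omegat], Gauss quadrature with positive weights writes
   [int (x - c) omega] as a positive combination of the [(lam k - c)(1 + a lam k)],
   which puts [int x omega / int omega] strictly between the extreme zeros.
   For monotonicity, differentiating [int P_a q omegat_a = 0] in [a] shows that
   [dP/da] satisfies [int (dP/da) q omegat = int P q 5x/(1 + a x)^6] for [deg q <= N];
   with [q = l] this gives [(dP/da)(x0) * P'(x0) > 0], and implicit differentiation of
   [P_a (lam_k a) = 0] yields [lam_k' = - (dP/da)(x0) / P'(x0) < 0]. Differentiability
   is proved directly: the difference quotients of [P_a] converge uniformly on [-1, 1],
   which also makes the zeros continuous in [a]. *)

(** * Real polynomials of bounded degree *)

Definition deg_lt (n : nat) (f : R -> R) : Prop :=
  exists c : nat -> R, forall x, f x = psum c n x.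

Lemma psum_ext c d n x : (forall i, (i < n)%nat -> c i = d i) -> psum c n x = psum d n x.
Proof.
  induction n as [|n IH]; simpl; intros H; auto.
  rewrite IH by (intros; apply H; lia). rewrite H by lia. reflexivity.
Qed.

Lemma psum_plus c d n x : psum (fun i => c i + d i) n x = psum c n x + psum d n x.
Proof. induction n as [|n IH]; simpl; [lra|]. rewrite IH. ring. Qed.

Lemma psum_scal k c n x : psum (fun i => k * c i) n x = k * psum c n x.
Proof. induction n as [|n IH]; simpl; [lra|]. rewrite IH. ring. Qed.

Lemma psum_shift c n x : psum c (S n) x = c O + x * psum (fun i => c (S i)) n x.
Proof. induction n as [|n IH]; simpl; [ring|]. simpl in IH. rewrite IH. ring. Qed.

Lemma deg_lt_ext n f g : (forall x, f x = g x) -> deg_lt n f -> deg_lt n g.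
Proof. intros E [c Hc]. exists c. intros x. rewrite <- E. auto. Qed.

Lemma deg_lt_plus n f g : deg_lt n f -> deg_lt n g -> deg_lt n (fun x => f x + g x).
Proof.
  intros [c Hc] [d Hd]. exists (fun i => c i + d i). intros x.
  rewrite psum_plus, Hc, Hd. reflexivity.
Qed.

Lemma deg_lt_scal n k f : deg_lt n f -> deg_lt n (fun x => k * f x).
Proof. intros [c Hc]. exists (fun i => k * c i). intros x. rewrite psum_scal, Hc. reflexivity. Qed.

Lemma deg_lt_minus n f g : deg_lt n f -> deg_lt n g -> deg_lt n (fun x => f x - g x).
Proof.
  intros Hf Hg. apply (deg_lt_ext n (fun x => f x + (-1) * g x)); [intros; ring|].
  apply deg_lt_plus; [|apply deg_lt_scal]; assumption.
Qed.

Lemma deg_lt_zero n : deg_lt n (fun _ => 0).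
Proof.
  exists (fun _ => 0). intros x. induction n as [|n IH]; simpl; [lra|]. rewrite <- IH. ring.
Qed.

Lemma deg_lt_S n f : deg_lt n f -> deg_lt (S n) f.
Proof.
  intros [c Hc]. exists (fun i => if (i <? n)%nat then c i else 0). intros x. simpl.
  rewrite Nat.ltb_irrefl, (psum_ext _ c n), Hc; [ring|].
  intros i Hi. apply Nat.ltb_lt in Hi. rewrite Hi. reflexivity.
Qed.

Lemma deg_lt_le m n f : (m <= n)%nat -> deg_lt m f -> deg_lt n f.
Proof. induction 1; auto using deg_lt_S. Qed.

Lemma deg_lt_mulX n f : deg_lt n f -> deg_lt (S n) (fun x => x * f x).
Proof.
  intros [c Hc]. exists (fun i => match i with O => 0 | S j => c j end). intros x.
  rewrite psum_shift, Hc. cbv beta iota. change (psum (fun i => c i) n x) with (psum c n x). ring.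
Qed.

Lemma deg_lt_monomial n k : deg_lt (S n) (fun x => k * x ^ n).
Proof.
  destruct (deg_lt_zero n) as [c Hc].
  exists (fun i => if (i <? n)%nat then c i else k). intros x. simpl.
  rewrite Nat.ltb_irrefl, (psum_ext _ c n), <- Hc; [ring|].
  intros i Hi. apply Nat.ltb_lt in Hi. rewrite Hi. reflexivity.
Qed.

Lemma deg_lt_pow n : deg_lt (S n) (fun x => x ^ n).
Proof. apply (deg_lt_ext _ (fun x => 1 * x ^ n)); [intros; ring|apply deg_lt_monomial]. Qed.

Lemma deg_lt_const n k : deg_lt (S n) (fun _ => k).
Proof.
  apply (deg_lt_le 1); [lia|].
  apply (deg_lt_ext 1 (fun x => k * x ^ 0)); [intros; simpl; ring|apply deg_lt_monomial].
Qed.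

Lemma deg_lt_sum m n (F : nat -> R -> R) : (forall k, (k <= n)%nat -> deg_lt m (F k)) ->
  deg_lt m (fun x => sum_f_R0 (fun k => F k x) n).
Proof.
  induction n as [|n IH]; intros H; [apply (deg_lt_ext m (F 0%nat)); auto|].
  apply (deg_lt_ext m (fun x => sum_f_R0 (fun k => F k x) n + F (S n) x)); [reflexivity|].
  apply deg_lt_plus; [apply IH; intros|]; apply H; lia.
Qed.

Lemma monic_poly_iff n f : monic_poly n f <-> deg_lt n (fun x => f x - x ^ n).
Proof.
  split.
  - intros [c Hc]. exists c. intros x. rewrite Hc. ring.
  - intros [c Hc]. exists c. intros x. rewrite <- Hc. ring.
Qed.

Lemma monic_deg_lt n f : monic_poly n f -> deg_lt (S n) f.
Proof.
  intros Hf%monic_poly_iff. apply (deg_lt_ext _ (fun x => (f x - x ^ n) + x ^ n)); [intros; ring|].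
  apply deg_lt_plus; [apply deg_lt_S; exact Hf|apply deg_lt_pow].
Qed.

Lemma monic_minus_deg_lt n f g : monic_poly n f -> monic_poly n g -> deg_lt n (fun x => f x - g x).
Proof.
  intros Hf%monic_poly_iff Hg%monic_poly_iff.
  apply (deg_lt_ext _ (fun x => (f x - x ^ n) - (g x - x ^ n))); [intros; ring|].
  apply deg_lt_minus; assumption.
Qed.

Lemma deg_lt_factor n f r : deg_lt (S n) f -> f r = 0 ->
  exists g, deg_lt n g /\ forall x, f x = (x - r) * g x.
Proof.
  revert f. induction n as [|n IH]; intros f [c Hc] Hr.
  - exists (fun _ => 0). split; [apply deg_lt_zero|]. intros x.
    rewrite Hc. rewrite Hc in Hr. simpl in *. lra.
  - set (h := psum (fun i => c (S i)) (S n)).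
    assert (Hf : forall x, f x = c O + x * h x) by (intros; rewrite Hc, psum_shift; auto).
    assert (Hh : deg_lt (S n) h) by (exists (fun i => c (S i)); auto).
    destruct (IH (fun x => h x - h r)) as [k [Hk Ek]];
      [apply deg_lt_minus; [exact Hh|apply deg_lt_const]|lra|].
    exists (fun x => h x + r * k x). split.
    + apply deg_lt_plus; [exact Hh|apply deg_lt_scal, deg_lt_S, Hk].
    + intros x. rewrite Hf. rewrite Hf in Hr.
      replace (c O) with (- r * h r) by lra.
      transitivity ((x - r) * h x + r * (h x - h r)); [ring|]. rewrite Ek. ring.
Qed.

Lemma pow_sub_factor n r : exists s, monic_poly n s /\
  forall x, x ^ (S n) - r ^ (S n) = (x - r) * s x.
Proof.
  induction n as [|n [s [Hs E]]].
  - exists (fun _ => 1). split; [exists (fun _ => 0)|]; intros; simpl; ring.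
  - exists (fun x => x * s x + r ^ (S n)). split.
    + apply monic_poly_iff in Hs. apply monic_poly_iff.
      apply (deg_lt_ext _ (fun x => x * (s x - x ^ n) + r ^ S n)); [intros; simpl; ring|].
      apply deg_lt_plus; [apply deg_lt_mulX, Hs|apply deg_lt_const].
    + intros x. transitivity (x * (x ^ S n - r ^ S n) + r ^ S n * (x - r)); [simpl; ring|].
      rewrite E. ring.
Qed.

Lemma monic_factor n f r : monic_poly (S n) f -> f r = 0 ->
  exists g, monic_poly n g /\ forall x, f x = (x - r) * g x.
Proof.
  intros Hf Hr. apply monic_poly_iff in Hf.
  set (p := fun x => f x - x ^ S n) in Hf.
  destruct (pow_sub_factor n r) as [s [Hs Es]].
  destruct (deg_lt_factor n (fun x => p x - p r) r) as [k [Hk Ek]];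
    [apply deg_lt_minus; [exact Hf|apply deg_lt_const]|lra|].
  exists (fun x => s x + k x). split.
  - apply monic_poly_iff in Hs. apply monic_poly_iff.
    apply (deg_lt_ext _ (fun x => (s x - x ^ n) + k x)); [intros; ring|].
    apply deg_lt_plus; assumption.
  - intros x. transitivity ((x ^ S n - r ^ S n) + (p x - p r)); [unfold p; lra|].
    rewrite Es, Ek. ring.
Qed.

Fixpoint rprod (n : nat) (F : nat -> R) : R :=
  match n with O => 1 | S m => rprod m F * F m end.

Lemma rprod_mult n F G : rprod n (fun i => F i * G i) = rprod n F * rprod n G.
Proof. induction n as [|n IH]; simpl; [ring|]. rewrite IH. ring. Qed.

Lemma rprod_pos n F : (forall i, (i < n)%nat -> 0 < F i) -> 0 < rprod n F.
Proof.
  induction n as [|n IH]; simpl; intros H; [lra|].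
  apply Rmult_lt_0_compat; [apply IH; intros|]; apply H; lia.
Qed.

Lemma rprod_neq0 n F : (forall i, (i < n)%nat -> F i <> 0) -> rprod n F <> 0.
Proof.
  induction n as [|n IH]; simpl; intros H; [lra|].
  apply Rmult_integral_contrapositive_currified; [apply IH; intros|]; apply H; lia.
Qed.

Lemma rprod_neg n F j : (j < n)%nat -> F j < 0 ->
  (forall i, (i < n)%nat -> i <> j -> 0 < F i) -> rprod n F < 0.
Proof.
  induction n as [|n IH]; intros Hj Fj H; [lia|]. simpl.
  destruct (Nat.eq_dec j n) as [->|Hne].
  - assert (0 < rprod n F) by (apply rprod_pos; intros; apply H; lia). nra.
  - assert (rprod n F < 0) by (apply IH; [lia|exact Fj|intros; apply H; lia]).
    assert (0 < F n) by (apply H; lia). nra.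
Qed.

Lemma monic_eq_rprod n f (z : nat -> R) : monic_poly n f ->
  (forall i j, (i < n)%nat -> (j < n)%nat -> i <> j -> z i <> z j) ->
  (forall i, (i < n)%nat -> f (z i) = 0) -> forall x, f x = rprod n (fun i => x - z i).
Proof.
  revert f. induction n as [|n IH]; intros f Hf Hz H0.
  - destruct Hf as [c Hc]. intros x. rewrite Hc. simpl. ring.
  - destruct (monic_factor n f (z n)) as [g [Hg Eg]]; auto.
    assert (G : forall x, g x = rprod n (fun i => x - z i)).
    { apply IH; [exact Hg|intros; apply Hz; auto; lia|].
      intros i Hi. assert (Hzi := H0 i ltac:(lia)). rewrite Eg in Hzi.
      assert (z i - z n <> 0) by (apply Rminus_eq_contra, Hz; lia).
      apply Rmult_integral in Hzi as [|]; [contradiction|assumption]. }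
    intros x. rewrite Eg, G. simpl. ring.
Qed.

Lemma deg_lt_vanish_factor n m g (z : nat -> R) : deg_lt (n + m) g ->
  (forall i j, (i < m)%nat -> (j < m)%nat -> i <> j -> z i <> z j) ->
  (forall i, (i < m)%nat -> g (z i) = 0) ->
  exists s, deg_lt n s /\ forall x, g x = rprod m (fun i => x - z i) * s x.
Proof.
  revert g. induction m as [|m IH]; intros g Hg Hz H0.
  - exists g. split; [rewrite Nat.add_0_r in Hg; exact Hg|intros; simpl; ring].
  - rewrite Nat.add_succ_r in Hg.
    destruct (deg_lt_factor (n + m) g (z m) Hg (H0 m ltac:(lia))) as [h [Hh Eh]].
    destruct (IH h Hh) as [s [Hs Es]]; [intros; apply Hz; auto; lia|..].
    + intros i Hi. assert (Hzi := H0 i ltac:(lia)). rewrite Eh in Hzi.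
      assert (z i - z m <> 0) by (apply Rminus_eq_contra, Hz; lia).
      apply Rmult_integral in Hzi as [|]; [contradiction|assumption].
    + exists s. split; [exact Hs|]. intros x. rewrite Eh, Es. simpl. ring.
Qed.

(* Evaluate at the n+1 points i/(n+1): a monic polynomial of degree n vanishing at
   n of them is the product of the linear factors, which is nonzero at the last one. *)
Lemma monic_nonvanishing n f : monic_poly n f -> exists x, -1 < x < 1 /\ f x <> 0.
Proof.
  intros Hf.
  set (z := fun i : nat => INR i / INR (S n)).
  assert (HS : 0 < INR (S n)) by (apply lt_0_INR; lia).
  assert (Hzr : forall i, (i <= n)%nat -> -1 < z i < 1).
  { intros i Hi. unfold z. assert (0 <= INR i) by apply pos_INR.
    assert (INR i < INR (S n)) by (apply lt_INR; lia).
    split; [|apply Rmult_lt_reg_r with (INR (S n)); auto; unfold Rdiv;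
             rewrite Rmult_assoc, Rinv_l; lra].
    apply Rlt_le_trans with 0; [lra|]. apply Rdiv_le_0_compat; lra. }
  assert (Hzi : forall i j, i <> j -> z i <> z j).
  { intros i j Hij E. apply Hij, INR_eq. unfold z in E.
    apply Rmult_eq_reg_r with (/ INR (S n)); [exact E|apply Rinv_neq_0_compat; lra]. }
  destruct (classic (exists i, (i <= n)%nat /\ f (z i) <> 0)) as [[i [Hi Hf0]]|Hno].
  - exists (z i). auto.
  - exfalso.
    assert (Hall : forall i, (i <= n)%nat -> f (z i) = 0).
    { intros i Hi. apply NNPP. intros Hne. apply Hno. exists i. auto. }
    assert (E := monic_eq_rprod n f z Hf ltac:(auto) ltac:(intros; apply Hall; lia) (z n)).
    rewrite Hall in E by lia. symmetry in E. revert E. apply rprod_neq0.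
    intros i Hi. apply Rminus_eq_contra, Hzi. lia.
Qed.

Lemma continuous_Rplus (f g : R -> R) (x : R) :
  continuous f x -> continuous g x -> continuous (fun y => f y + g y) x.
Proof. exact (continuous_plus f g x). Qed.

Lemma continuous_Rmult (f g : R -> R) (x : R) :
  continuous f x -> continuous g x -> continuous (fun y => f y * g y) x.
Proof. exact (continuous_mult f g x). Qed.

Lemma continuous_pow n (x : R) : continuous (fun y => y ^ n) x.
Proof.
  induction n as [|n IH]; simpl; [apply continuous_const|].
  apply continuous_Rmult; [apply continuous_id|exact IH].
Qed.

Lemma deg_lt_continuous n f x : deg_lt n f -> continuous f x.
Proof.
  intros [c Hc]. apply (continuous_ext (psum c n)); [intros; rewrite Hc; auto|].
  clear Hc. induction n as [|n IH]; simpl; [apply continuous_const|].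
  apply continuous_Rplus; [exact IH|].
  apply continuous_Rmult; [apply continuous_const|apply continuous_pow].
Qed.

Lemma deg_lt_IVT n f u v : deg_lt n f -> u < v -> f u * f v < 0 ->
  exists r, u < r < v /\ f r = 0.
Proof.
  revert f. enough (Hneg : forall f, deg_lt n f -> u < v -> f u < 0 -> 0 < f v ->
                             exists r, u < r < v /\ f r = 0).
  { intros f Hf Huv Hs. destruct (Rlt_dec (f u) 0).
    - apply Hneg; auto. nra.
    - assert (Hf' : deg_lt n (fun x => - f x)).
      { apply (deg_lt_ext _ (fun x => -1 * f x)); [intros; ring|apply deg_lt_scal, Hf]. }
      assert (0 < f u) by (destruct (Req_dec (f u) 0) as [E|]; [rewrite E in Hs|]; lra).
      destruct (Hneg _ Hf' Huv) as [r [Hr Er]]; [lra|nra|].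
      exists r. split; [exact Hr|lra]. }
  intros f Hf Huv Hu Hv.
  assert (Cf : continuity f) by (intros x; apply continuity_pt_filterlim, (deg_lt_continuous n), Hf).
  destruct (IVT f u v Cf Huv Hu Hv) as [z [[Hz1 Hz2] Ez]].
  exists z. split; [|exact Ez].
  split; apply Rnot_le_lt; intros ?; [replace z with u in Ez by lra|replace z with v in Ez by lra]; lra.
Qed.

Lemma pow_abs_le1 (x : R) n : -1 <= x <= 1 -> Rabs (x ^ n) <= 1.
Proof.
  intros Hx. rewrite <- RPow_abs, <- (pow1 n).
  apply pow_incr. split; [apply Rabs_pos|apply Rabs_le; lra].
Qed.

Lemma deg_lt_bounded n f : deg_lt n f ->
  exists M, 0 <= M /\ forall x, -1 <= x <= 1 -> Rabs (f x) <= M.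
Proof.
  intros [c Hc]. exists (psum (fun i => Rabs (c i)) n 1).
  assert (G : forall m x, -1 <= x <= 1 -> Rabs (psum c m x) <= psum (fun i => Rabs (c i)) m 1).
  { induction m as [|m IH]; intros x Hx; simpl; [rewrite Rabs_R0; lra|].
    eapply Rle_trans; [apply Rabs_triang|]. rewrite Rabs_mult, pow1.
    assert (Rabs (c m) * Rabs (x ^ m) <= Rabs (c m) * 1)
      by (apply Rmult_le_compat_l; [apply Rabs_pos|apply pow_abs_le1; auto]).
    specialize (IH x Hx). lra. }
  split; [eapply Rle_trans; [apply Rabs_pos|apply (G n 0); lra]|].
  intros x Hx. rewrite Hc. apply G, Hx.
Qed.

Lemma deg_lt_lipschitz n f x : deg_lt n f ->
  exists L, 0 <= L /\ forall y, -1 <= y <= 1 -> Rabs (f y - f x) <= L * Rabs (y - x).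
Proof.
  intros Hf. destruct (deg_lt_factor n (fun y => f y - f x) x) as [g [Hg Eg]];
    [apply deg_lt_minus; [apply deg_lt_S, Hf|apply deg_lt_const]|lra|].
  destruct (deg_lt_bounded n g Hg) as [M [HM HM']]. exists M. split; [exact HM|].
  intros y Hy. rewrite Eg, Rabs_mult, Rmult_comm.
  apply Rmult_le_compat_r; [apply Rabs_pos|auto].
Qed.

Lemma monic_basis_span (phi : nat -> R -> R) : (forall j, monic_poly j (phi j)) ->
  forall n q, deg_lt (S n) q ->
  exists d : nat -> R, forall x, q x = sum_f_R0 (fun j => d j * phi j x) n.
Proof.
  intros Hphi. induction n as [|n IH]; intros q [c Hc].
  - exists (fun _ => c 0%nat). intros x. rewrite Hc. destruct (Hphi 0%nat) as [c0 Hc0].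
    simpl. rewrite Hc0. simpl. ring.
  - assert (Hp := Hphi (S n)). apply monic_poly_iff in Hp.
    destruct (IH (fun x => psum c (S n) x - c (S n) * (phi (S n) x - x ^ S n))) as [d Hd].
    { apply deg_lt_minus; [exists c; auto|apply deg_lt_scal, Hp]. }
    exists (fun j => if (j =? S n)%nat then c (S n) else d j). intros x.
    simpl sum_f_R0. rewrite Nat.eqb_refl, (sum_eq _ (fun j => d j * phi j x)), <- Hd, Hc.
    + simpl. ring.
    + intros i Hi. destruct (Nat.eqb_spec i (S n)); [lia|reflexivity].
Qed.

(** * Finite sums, continuity and integrals on [-1, 1] *)

Lemma sum_f_R0_single (F : nat -> R) n i : (i <= n)%nat ->
  (forall k, (k <= n)%nat -> k <> i -> F k = 0) -> sum_f_R0 F n = F i.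
Proof.
  intros Hi H. induction n as [|n IH]; simpl; [replace i with O by lia; reflexivity|].
  destruct (Nat.eq_dec i (S n)) as [->|Hne].
  - rewrite (sum_eq _ (fun _ => 0)), sum_cte by (intros; apply H; lia). ring.
  - rewrite IH, (H (S n)) by (try lia; intros; apply H; lia). ring.
Qed.

Lemma sum_f_R0_ge_term (F : nat -> R) n i : (i <= n)%nat ->
  (forall k, (k <= n)%nat -> 0 <= F k) -> F i <= sum_f_R0 F n.
Proof.
  intros Hi H. set (G := fun k => if (k =? i)%nat then F i else 0).
  replace (F i) with (G i) by (unfold G; rewrite Nat.eqb_refl; reflexivity).
  rewrite <- (sum_f_R0_single G n i Hi).
  - apply sum_Rle. intros k Hk. unfold G. destruct (Nat.eqb_spec k i) as [->|]; [lra|apply H, Hk].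
  - intros k _ Hk. unfold G. apply Nat.eqb_neq in Hk. rewrite Hk. reflexivity.
Qed.

Lemma sum_f_R0_abs_le n (c F : nat -> R) B : (forall j, (j <= n)%nat -> Rabs (F j) <= B) ->
  Rabs (sum_f_R0 (fun j => c j * F j) n) <= sum_f_R0 (fun j => Rabs (c j)) n * B.
Proof.
  intros H. eapply Rle_trans; [apply sum_f_R0_triangle|].
  rewrite Rmult_comm, scal_sum. apply sum_Rle. intros j Hj. rewrite Rabs_mult.
  apply Rmult_le_compat_l; [apply Rabs_pos|apply H, Hj].
Qed.

Definition cont_pm1 (f : R -> R) : Prop := forall x, -1 <= x <= 1 -> continuous f x.

Lemma cont_pm1_plus f g : cont_pm1 f -> cont_pm1 g -> cont_pm1 (fun y => f y + g y).
Proof. intros Hf Hg x Hx. apply continuous_Rplus; auto. Qed.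

Lemma cont_pm1_mult f g : cont_pm1 f -> cont_pm1 g -> cont_pm1 (fun y => f y * g y).
Proof. intros Hf Hg x Hx. apply continuous_Rmult; auto. Qed.

Lemma cont_pm1_const c : cont_pm1 (fun _ => c).
Proof. intros x _. apply continuous_const. Qed.

Lemma cont_pm1_id : cont_pm1 (fun y => y).
Proof. intros x _. apply continuous_id. Qed.

Lemma cont_pm1_minus f g : cont_pm1 f -> cont_pm1 g -> cont_pm1 (fun y => f y - g y).
Proof.
  intros Hf Hg x Hx. apply (continuous_ext (fun y => f y + (-1) * g y)).
  - intros y. simpl. ring.
  - apply continuous_Rplus, continuous_Rmult; auto. apply continuous_const.
Qed.

Lemma cont_pm1_inv f : cont_pm1 f -> (forall x, -1 <= x <= 1 -> f x <> 0) -> cont_pm1 (fun y => / f y).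
Proof. intros Hf Hz x Hx. apply continuous_Rinv_comp; auto. Qed.

Lemma cont_pm1_deg_lt n f : deg_lt n f -> cont_pm1 f.
Proof. intros H x _. eapply deg_lt_continuous, H. Qed.

Lemma cont_pm1_sum (F : nat -> R -> R) n : (forall i, (i <= n)%nat -> cont_pm1 (F i)) ->
  cont_pm1 (fun x => sum_f_R0 (fun i => F i x) n).
Proof.
  induction n as [|n IH]; intros H; [apply H; lia|].
  apply (cont_pm1_plus (fun x => sum_f_R0 (fun i => F i x) n)); [apply IH; intros|]; apply H; lia.
Qed.

Ltac cont_pm1_tac :=
  repeat match goal with
  | H : cont_pm1 _ |- cont_pm1 _ => exact H
  | |- cont_pm1 (fun y => @?f y * @?g y) => apply (cont_pm1_mult f g)
  | |- cont_pm1 (fun y => @?f y + @?g y) => apply (cont_pm1_plus f g)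
  | |- cont_pm1 (fun y => @?f y - @?g y) => apply (cont_pm1_minus f g)
  | |- cont_pm1 (fun _ => ?c) => apply cont_pm1_const
  | |- cont_pm1 (fun y => y) => apply cont_pm1_id
  | H : forall _ : nat, cont_pm1 _ |- cont_pm1 _ => apply H
  end.

Definition integ (f : R -> R) : R := RInt f (-1) 1.

Lemma cont_pm1_ex_RInt f : cont_pm1 f -> ex_RInt f (-1) 1.
Proof.
  intros H. apply (ex_RInt_continuous (V:=R_CompleteNormedModule)). intros z Hz.
  rewrite Rmin_left, Rmax_right in Hz by lra. apply H, Hz.
Qed.

Lemma integ_ext f g : (forall x, -1 <= x <= 1 -> f x = g x) -> integ f = integ g.
Proof.
  intros H. apply RInt_ext. intros x Hx. rewrite Rmin_left, Rmax_right in Hx by lra. apply H. lra.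
Qed.

Lemma integ_plus f g : cont_pm1 f -> cont_pm1 g -> integ (fun x => f x + g x) = integ f + integ g.
Proof. intros H1 H2. exact (RInt_plus f g (-1) 1 (cont_pm1_ex_RInt f H1) (cont_pm1_ex_RInt g H2)). Qed.

Lemma integ_scal k f : cont_pm1 f -> integ (fun x => k * f x) = k * integ f.
Proof. intros H. exact (RInt_scal f (-1) 1 k (cont_pm1_ex_RInt f H)). Qed.

Lemma integ_minus f g : cont_pm1 f -> cont_pm1 g -> integ (fun x => f x - g x) = integ f - integ g.
Proof. intros H1 H2. exact (RInt_minus f g (-1) 1 (cont_pm1_ex_RInt f H1) (cont_pm1_ex_RInt g H2)). Qed.

Lemma integ_sum (F : nat -> R -> R) n : (forall i, (i <= n)%nat -> cont_pm1 (F i)) ->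
  integ (fun x => sum_f_R0 (fun i => F i x) n) = sum_f_R0 (fun i => integ (F i)) n.
Proof.
  induction n as [|n IH]; intros H; [reflexivity|].
  assert (C := cont_pm1_sum F n ltac:(intros; apply H; lia)).
  simpl. rewrite (integ_plus (fun x => sum_f_R0 (fun i => F i x) n)), IH by (auto; intros; apply H; lia).
  reflexivity.
Qed.

Lemma RInt_eq_integ f l : RInt_eq f (-1) 1 l -> integ f = l.
Proof. intros [pr Hpr]. unfold integ. rewrite (RInt_Reals f (-1) 1 pr). exact Hpr. Qed.

Lemma integ_RInt_eq f : cont_pm1 f -> RInt_eq f (-1) 1 (integ f).
Proof.
  intros H. pose proof (ex_RInt_Reals_0 f (-1) 1 (cont_pm1_ex_RInt f H)) as pr.
  exists pr. unfold integ. rewrite (RInt_Reals f (-1) 1 pr). reflexivity.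
Qed.

Lemma integ_abs_le f M : cont_pm1 f -> (forall x, -1 <= x <= 1 -> Rabs (f x) <= M) ->
  Rabs (integ f) <= 2 * M.
Proof.
  intros H HM.
  assert (K := norm_RInt_le_const f (-1) 1 (integ f) M ltac:(lra) HM
                 (RInt_correct _ _ _ (cont_pm1_ex_RInt f H))).
  replace (1 - -1) with 2 in K by ring. exact K.
Qed.

Lemma integ_prod3_abs_le f g h A B C :
  cont_pm1 f -> cont_pm1 g -> cont_pm1 h ->
  (forall x, -1 <= x <= 1 -> Rabs (f x) <= A /\ Rabs (g x) <= B /\ Rabs (h x) <= C) ->
  Rabs (integ (fun x => f x * g x * h x)) <= 2 * (A * B * C).
Proof.
  intros Cf Cg Ch Hbound. apply integ_abs_le; [cont_pm1_tac|]. intros x Hx.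
  destruct (Hbound x Hx) as [H1 [H2 H3]]. rewrite !Rabs_mult.
  pose proof (Rabs_pos (f x)). pose proof (Rabs_pos (g x)). pose proof (Rabs_pos (h x)).
  apply Rmult_le_compat; try apply Rmult_le_pos; auto. apply Rmult_le_compat; auto.
Qed.

Lemma integ_pos f x0 : cont_pm1 f -> (forall x, -1 <= x <= 1 -> 0 <= f x) ->
  -1 < x0 < 1 -> 0 < f x0 -> 0 < integ f.
Proof.
  intros H H0 Hx0 Hf0.
  assert (Hc := H x0 ltac:(lra)).
  apply (proj2 (continuity_pt_filterlim f x0)) in Hc.
  destruct (Hc (f x0 / 2) ltac:(lra)) as [d [Hd Hdd]].
  set (e := Rmin (d / 2) (Rmin ((x0 + 1) / 2) ((1 - x0) / 2))).
  assert (He : 0 < e) by (unfold e; repeat apply Rmin_pos; lra).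
  assert (He1 : e <= d / 2) by apply Rmin_l.
  assert (He2 : e <= (x0 + 1) / 2) by (eapply Rle_trans; [apply Rmin_r|apply Rmin_l]).
  assert (He3 : e <= (1 - x0) / 2) by (eapply Rle_trans; [apply Rmin_r|apply Rmin_r]).
  assert (Pos : forall y, x0 - e <= y <= x0 + e -> 0 < f y).
  { intros y Hy. destruct (Req_dec y x0) as [->|Hne]; [lra|].
    assert (Rabs (f y - f x0) < f x0 / 2) as Hy'%Rabs_def2; [|lra].
    apply Hdd. split; [split; [exact I|auto]|]. simpl. unfold R_dist. apply Rabs_def1; lra. }
  assert (Ex : forall a b, -1 <= a -> a <= b -> b <= 1 -> ex_RInt f a b).
  { intros a b Ha Hab Hb. apply (ex_RInt_continuous (V:=R_CompleteNormedModule)). intros z Hz.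
    rewrite Rmin_left, Rmax_right in Hz by lra. apply H. lra. }
  unfold integ.
  rewrite <- (RInt_Chasles f (-1) (x0 - e) 1), <- (RInt_Chasles f (x0 - e) (x0 + e) 1)
    by (apply Ex; lra).
  assert (0 <= RInt f (-1) (x0 - e)) by (apply RInt_ge_0; [lra|apply Ex; lra|intros; apply H0; lra]).
  assert (0 <= RInt f (x0 + e) 1) by (apply RInt_ge_0; [lra|apply Ex; lra|intros; apply H0; lra]).
  assert (0 < RInt f (x0 - e) (x0 + e))
    by (apply RInt_gt_0; [lra|intros; apply Pos; lra|intros; apply H; lra]).
  change (0 < RInt f (-1) (x0 - e) + (RInt f (x0 - e) (x0 + e) + RInt f (x0 + e) 1)). lra.
Qed.

(** * Increasing node sequences and Lagrange numerators *)

Lemma finite_pos_lower_bound n (F : nat -> R) : (forall j, (j <= n)%nat -> 0 < F j) ->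
  exists m, 0 < m /\ forall j, (j <= n)%nat -> m <= F j.
Proof.
  induction n as [|n IH]; intros H.
  - exists (F 0%nat). split; [apply H; lia|]. intros j Hj. replace j with 0%nat by lia. lra.
  - destruct IH as [m [Hm Hm']]; [intros; apply H; lia|].
    exists (Rmin m (F (S n))). split; [apply Rmin_pos; [exact Hm|apply H; lia]|].
    intros j Hj. destruct (Nat.eq_dec j (S n)) as [->|]; [apply Rmin_r|].
    eapply Rle_trans; [apply Rmin_l|apply Hm'; lia].
Qed.

Lemma finite_upper_bound n (F : nat -> R) : exists M, 0 <= M /\ forall j, (j <= n)%nat -> F j <= M.
Proof.
  induction n as [|n [M [HM HM']]].
  - exists (Rmax 0 (F 0%nat)). split; [apply Rmax_l|]. intros j Hj. replace j with 0%nat by lia. apply Rmax_r.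
  - exists (Rmax M (F (S n))). split; [eapply Rle_trans; [exact HM|apply Rmax_l]|].
    intros j Hj. destruct (Nat.eq_dec j (S n)) as [->|]; [apply Rmax_r|].
    eapply Rle_trans; [apply HM'; lia|apply Rmax_l].
Qed.

Definition increasing_upto (z : nat -> R) (n : nat) : Prop :=
  forall k, (k < n)%nat -> z k < z (S k).

Section Increasing.
Variables (z : nat -> R) (n : nat).
Hypothesis z_incr : increasing_upto z n.

Lemma increasing_lt i j : (i < j)%nat -> (j <= n)%nat -> z i < z j.
Proof.
  intros Hij. induction Hij as [|m Hm IH]; intros Hn; [apply z_incr; lia|].
  apply Rlt_trans with (z m); [apply IH; lia|apply z_incr; lia].
Qed.

Lemma increasing_le i j : (i <= j)%nat -> (j <= n)%nat -> z i <= z j.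
Proof.
  intros Hij Hj. destruct (Nat.eq_dec i j) as [->|]; [lra|].
  left. apply increasing_lt; lia.
Qed.

Lemma increasing_inj i j : (i <= n)%nat -> (j <= n)%nat -> i <> j -> z i <> z j.
Proof.
  intros Hi Hj Hij. destruct (Nat.lt_ge_cases i j).
  - assert (z i < z j) by (apply increasing_lt; auto). lra.
  - assert (z j < z i) by (apply increasing_lt; lia). lra.
Qed.

Lemma increasing_min_gap :
  exists g, 0 < g /\ forall i j, (i <= n)%nat -> (j <= n)%nat -> i <> j -> g <= Rabs (z i - z j).
Proof.
  set (gap := fun i => if (i <? n)%nat then z (S i) - z i else 1).
  assert (Hgap : forall i, (i < n)%nat -> gap i = z (S i) - z i)
    by (intros i Hi; unfold gap; apply Nat.ltb_lt in Hi; rewrite Hi; reflexivity).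
  destruct (finite_pos_lower_bound n gap) as [g [Hg Hg2]].
  { intros i Hi. unfold gap. destruct (Nat.ltb_spec i n); [|lra].
    assert (z i < z (S i)) by (apply z_incr; lia). lra. }
  exists g. split; [exact Hg|].
  intros i j Hi Hj Hij. destruct (Nat.lt_ge_cases i j).
  - assert (z (S i) <= z j) by (apply increasing_le; lia).
    specialize (Hg2 i ltac:(lia)). rewrite Hgap in Hg2 by lia.
    rewrite Rabs_minus_sym, Rabs_right; lra.
  - assert (z (S j) <= z i) by (apply increasing_le; lia).
    specialize (Hg2 j ltac:(lia)). rewrite Hgap in Hg2 by lia. rewrite Rabs_right; lra.
Qed.

(* [rho] is increasing and [rho i = z (sg i)] for an increasing [sg]; such an [sg]
   on [0..n] into [0..n] satisfies both [i <= sg i] and [sg (n - d) <= n - d]. *)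
Lemma increasing_values_eq (rho : nat -> R) :
  increasing_upto rho n ->
  (forall i, (i <= n)%nat -> exists k, (k <= n)%nat /\ rho i = z k) ->
  forall i, (i <= n)%nat -> rho i = z i.
Proof.
  intros Hr Hm.
  assert (Hs : forall i, exists k, ((i <= n)%nat -> (k <= n)%nat /\ rho i = z k)).
  { intros i. destruct (Nat.le_gt_cases i n) as [Hi|Hi].
    - destruct (Hm i Hi) as [k Hk]. exists k. auto.
    - exists O. intros. lia. }
  set (sg := fun i => proj1_sig (constructive_indefinite_description _ (Hs i))).
  assert (Hsg : forall i, (i <= n)%nat -> (sg i <= n)%nat /\ rho i = z (sg i)).
  { intros i Hi. unfold sg. destruct (constructive_indefinite_description _ (Hs i)); simpl; auto. }
  assert (Inc : forall i, (i < n)%nat -> (sg i < sg (S i))%nat).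
  { intros i Hi. destruct (Hsg i ltac:(lia)) as [A1 A2], (Hsg (S i) ltac:(lia)) as [B1 B2].
    destruct (Nat.lt_ge_cases (sg i) (sg (S i))) as [|Hge]; auto. exfalso.
    assert (z (sg (S i)) <= z (sg i)) by (apply increasing_le; auto).
    assert (rho i < rho (S i)) by auto. lra. }
  assert (Lo : forall i, (i <= n)%nat -> (i <= sg i)%nat).
  { induction i as [|i IH]; intros Hi; [lia|].
    assert (i <= sg i)%nat by (apply IH; lia). assert (sg i < sg (S i))%nat by (apply Inc; lia). lia. }
  assert (Hi2 : forall d, (d <= n)%nat -> (sg (n - d) <= n - d)%nat).
  { induction d as [|d IH]; intros Hd; [replace (n - 0)%nat with n by lia; apply Hsg; lia|].
    assert (sg (n - d) <= n - d)%nat by (apply IH; lia).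
    assert (sg (n - S d) < sg (S (n - S d)))%nat as E by (apply Inc; lia).
    replace (S (n - S d)) with (n - d)%nat in E by lia. lia. }
  intros i Hi. destruct (Hsg i Hi) as [_ ->]. f_equal.
  assert (sg (n - (n - i)) <= n - (n - i))%nat as E by (apply Hi2; lia).
  replace (n - (n - i))%nat with i in E by lia. specialize (Lo i Hi). lia.
Qed.

End Increasing.

Definition skip (lam : nat -> R) (k i : nat) : R := if (i <? k)%nat then lam i else lam (S i).

Definition lagrange_num (lam : nat -> R) (N k : nat) (x : R) : R :=
  rprod N (fun i => x - skip lam k i).

Section Lagrange.
Variables (lam : nat -> R) (N : nat).
Hypothesis lam_incr : increasing_upto lam N.

Lemma skip_cases k i : (i < k /\ skip lam k i = lam i)%nat \/ (k <= i /\ skip lam k i = lam (S i))%nat.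
Proof. unfold skip. destruct (Nat.ltb_spec i k); [left|right]; auto. Qed.

Lemma skip_is_node k i : (i < N)%nat -> exists j, (j <= N)%nat /\ j <> k /\ skip lam k i = lam j.
Proof. intros Hi. destruct (skip_cases k i) as [[? ?]|[? ?]]; [exists i|exists (S i)]; repeat split; auto; lia. Qed.

Lemma skip_inj k i j : (i < N)%nat -> (j < N)%nat -> i <> j -> skip lam k i <> skip lam k j.
Proof.
  intros Hi Hj Hij.
  destruct (skip_cases k i) as [[A1 ->]|[A1 ->]], (skip_cases k j) as [[B1 ->]|[B1 ->]];
    apply (increasing_inj lam N lam_incr); lia.
Qed.

Lemma skip_neq k i : (k <= N)%nat -> (i < N)%nat -> skip lam k i <> lam k.
Proof.
  intros Hk Hi. destruct (skip_is_node k i Hi) as [j [Hj [Hjk ->]]].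
  apply (increasing_inj lam N lam_incr); auto.
Qed.

Lemma lagrange_num_self_neq0 k : (k <= N)%nat -> lagrange_num lam N k (lam k) <> 0.
Proof. intros Hk. apply rprod_neq0. intros i Hi. apply Rminus_eq_contra, not_eq_sym, skip_neq; auto. Qed.

Lemma lagrange_num_self_alternate j : (j < N)%nat ->
  lagrange_num lam N j (lam j) * lagrange_num lam N (S j) (lam (S j)) < 0.
Proof.
  intros Hj. unfold lagrange_num. rewrite <- rprod_mult. apply (rprod_neg N _ j Hj).
  - unfold skip. rewrite Nat.ltb_irrefl. replace (j <? S j)%nat with true by (symmetry; apply Nat.ltb_lt; lia).
    assert (lam j < lam (S j)) by (apply lam_incr; auto). nra.
  - intros i Hi Hij. unfold skip.
    destruct (Nat.ltb_spec i j), (Nat.ltb_spec i (S j)); try lia.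
    + assert (lam i < lam j) by (apply (increasing_lt lam N lam_incr); lia).
      assert (lam i < lam (S j)) by (apply (increasing_lt lam N lam_incr); lia). nra.
    + assert (lam j < lam (S i)) by (apply (increasing_lt lam N lam_incr); lia).
      assert (lam (S j) < lam (S i)) by (apply (increasing_lt lam N lam_incr); lia). nra.
Qed.

Lemma lagrange_num_same_sign k g u v : (k <= N)%nat ->
  (forall i j, (i <= N)%nat -> (j <= N)%nat -> i <> j -> g <= Rabs (lam i - lam j)) ->
  Rabs (u - lam k) < g / 2 -> Rabs (v - lam k) < g / 2 ->
  0 < lagrange_num lam N k u * lagrange_num lam N k v.
Proof.
  intros Hk Hg Hu%Rabs_def2 Hv%Rabs_def2. unfold lagrange_num. rewrite <- rprod_mult.
  apply rprod_pos. intros i Hi.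
  destruct (skip_is_node k i Hi) as [j [Hj [Hjk ->]]]. specialize (Hg j k Hj Hk Hjk).
  destruct (Rle_lt_dec 0 (lam j - lam k)).
  - rewrite Rabs_right in Hg by lra. nra.
  - rewrite Rabs_left in Hg by lra. nra.
Qed.

Variable P : R -> R.
Hypotheses (P_monic : monic_poly (S N) P) (P_zeros : sorted_zeros P N lam).

Lemma lagrange_num_factor k : (k <= N)%nat ->
  monic_poly N (lagrange_num lam N k) /\ forall x, P x = (x - lam k) * lagrange_num lam N k x.
Proof.
  intros Hk. destruct P_zeros as [_ [Hz _]].
  destruct (monic_factor N P (lam k) P_monic (Hz k Hk)) as [g [Hg Eg]].
  assert (G : forall x, g x = lagrange_num lam N k x).
  { apply monic_eq_rprod; [exact Hg|intros; apply skip_inj; auto|].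
    intros i Hi. destruct (skip_is_node k i Hi) as [j [Hj [Hjk E]]].
    assert (Z := Hz j Hj). rewrite <- E, Eg in Z.
    assert (skip lam k i - lam k <> 0) by (apply Rminus_eq_contra, skip_neq; auto).
    apply Rmult_integral in Z as [|]; [contradiction|assumption]. }
  split.
  - destruct Hg as [c Hc]. exists c. intros x. rewrite <- G. apply Hc.
  - intros x. rewrite Eg, G. reflexivity.
Qed.

Lemma lagrange_num_node k i : (k <= N)%nat -> (i <= N)%nat -> i <> k ->
  lagrange_num lam N k (lam i) = 0.
Proof.
  intros Hk Hi Hik. destruct (lagrange_num_factor k Hk) as [_ E].
  destruct P_zeros as [_ [Hz _]]. assert (Z := Hz i Hi). rewrite E in Z.
  assert (lam i - lam k <> 0) by (apply Rminus_eq_contra, (increasing_inj lam N lam_incr); auto).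
  apply Rmult_integral in Z as [|]; [contradiction|assumption].
Qed.

End Lagrange.

Lemma sorted_zeros_bracketed (Q : R -> R) n (mu u v : nat -> R) : sorted_zeros Q n mu ->
  (forall j, (j < n)%nat -> v j <= u (S j)) ->
  (forall j, (j <= n)%nat -> exists r, u j < r < v j /\ Q r = 0) ->
  forall j, (j <= n)%nat -> u j < mu j < v j.
Proof.
  intros [Hmu [_ Hall]] Huv Hex.
  assert (Ex : forall j, exists r, (j <= n)%nat -> u j < r < v j /\ Q r = 0).
  { intros j. destruct (Nat.le_gt_cases j n) as [Hj|Hj].
    - destruct (Hex j Hj) as [r Hr]. exists r. auto.
    - exists 0. intros. lia. }
  set (rho := fun j => proj1_sig (constructive_indefinite_description _ (Ex j))).
  assert (Hrho : forall j, (j <= n)%nat -> u j < rho j < v j /\ Q (rho j) = 0).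
  { intros j Hj. unfold rho. destruct (constructive_indefinite_description _ (Ex j)); simpl; auto. }
  assert (E : forall j, (j <= n)%nat -> rho j = mu j).
  { apply (increasing_values_eq mu n Hmu).
    - intros j Hj. assert (A := Hrho j ltac:(lia)). assert (B := Hrho (S j) ltac:(lia)).
      specialize (Huv j Hj). lra.
    - intros j Hj. apply Hall, Hrho, Hj. }
  intros j Hj. rewrite <- E by exact Hj. apply Hrho, Hj.
Qed.

(** * Orthogonal polynomials of a positive weight *)

Section OrthogonalPolynomials.
Variable w : R -> R.
Hypotheses (w_cont : cont_pm1 w) (w_pos : forall x, -1 <= x <= 1 -> 0 < w x).

Lemma orth_integ_deg_lt n p q : monic_orth_poly w n p -> deg_lt n q ->
  integ (fun x => p x * q x * w x) = 0.
Proof.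
  intros [Hp Ho] [c Hc].
  assert (Cp : cont_pm1 p) by (apply (cont_pm1_deg_lt (S n)), monic_deg_lt, Hp).
  assert (Cpow : forall m, cont_pm1 (fun x => x ^ m)) by (intros m; apply (cont_pm1_deg_lt (S m)), deg_lt_pow).
  rewrite (integ_ext _ (fun x => p x * psum c n x * w x)) by (intros; rewrite Hc; reflexivity).
  assert (G : forall m, (m <= n)%nat -> integ (fun x => p x * psum c m x * w x) = 0).
  { induction m as [|m IH]; intros Hm.
    - rewrite (integ_ext _ (fun _ => 0 * 0)) by (intros; simpl; ring).
      rewrite integ_scal by apply cont_pm1_const. ring.
    - assert (Cm : cont_pm1 (psum c m)) by (apply (cont_pm1_deg_lt m); exists c; reflexivity).
      rewrite (integ_ext _ (fun x => p x * psum c m x * w x + c m * (p x * x ^ m * w x)))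
        by (intros; simpl; ring).
      rewrite integ_plus, integ_scal, IH, (RInt_eq_integ _ _ (Ho m ltac:(lia))) by (try lia; cont_pm1_tac).
      ring. }
  apply G. lia.
Qed.

Lemma integ_sq_pos n q : monic_poly n q -> 0 < integ (fun x => q x * q x * w x).
Proof.
  intros Hq. destruct (monic_nonvanishing n q Hq) as [y [Hy Hqy]].
  assert (Cq : cont_pm1 q) by (apply (cont_pm1_deg_lt (S n)), monic_deg_lt, Hq).
  apply (integ_pos _ y); [cont_pm1_tac| |exact Hy|].
  - intros x Hx. specialize (w_pos x Hx). nra.
  - specialize (w_pos y ltac:(lra)). assert (0 < q y * q y) by (destruct (Rlt_dec 0 (q y)); nra). nra.
Qed.

Lemma orth_integ_monic n p l : monic_orth_poly w n p -> monic_poly n l ->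
  integ (fun x => p x * l x * w x) = integ (fun x => p x * p x * w x).
Proof.
  intros Hp Hl. assert (Hd := monic_minus_deg_lt n l p Hl (proj1 Hp)).
  assert (Cp : cont_pm1 p) by (apply (cont_pm1_deg_lt (S n)), monic_deg_lt, Hp).
  assert (Cd : cont_pm1 (fun x => l x - p x)) by (apply (cont_pm1_deg_lt n), Hd).
  rewrite (integ_ext _ (fun x => p x * p x * w x + p x * (l x - p x) * w x)) by (intros; ring).
  rewrite integ_plus, (orth_integ_deg_lt n p (fun x => l x - p x)) by (auto; cont_pm1_tac). ring.
Qed.

Section ZeroFactor.
Variables (N : nat) (P l : R -> R) (x0 : R).
Hypotheses (P_orth : monic_orth_poly w (S N) P) (P_eq : forall x, P x = (x - x0) * l x)
  (l_monic : monic_poly N l).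

Let Cl : cont_pm1 l := cont_pm1_deg_lt _ _ (monic_deg_lt _ _ l_monic).

(* Every [f] of degree [<= N] is [f x0 + (x - x0) s] with [s] orthogonal to [P]. *)
Lemma orth_factor_integ f : deg_lt (S N) f ->
  integ (fun x => f x * l x * w x) = f x0 * integ (fun x => l x * w x).
Proof.
  intros Hf.
  destruct (deg_lt_factor N (fun x => f x - f x0) x0) as [s [Hs Es]];
    [apply deg_lt_minus; [exact Hf|apply deg_lt_const]|lra|].
  assert (Cs : cont_pm1 s) by (apply (cont_pm1_deg_lt N), Hs).
  assert (CP : cont_pm1 P) by (apply (cont_pm1_deg_lt (S (S N))), monic_deg_lt, P_orth).
  rewrite (integ_ext _ (fun x => f x0 * (l x * w x) + P x * s x * w x)).
  - rewrite integ_plus, integ_scal, (orth_integ_deg_lt (S N) P s) by (auto using deg_lt_S; cont_pm1_tac).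
    ring.
  - intros x _. rewrite P_eq. specialize (Es x). simpl in Es.
    replace (f x) with (f x0 + (x - x0) * s x) by lra. ring.
Qed.

Lemma christoffel_pos : 0 < l x0 * integ (fun x => l x * w x).
Proof.
  rewrite <- orth_factor_integ by apply monic_deg_lt, l_monic.
  apply (integ_sq_pos N), l_monic.
Qed.

Lemma orth_zero_inside : -1 < x0 < 1.
Proof.
  assert (O : integ (fun x => P x * l x * w x) = 0)
    by (apply (orth_integ_deg_lt (S N)), monic_deg_lt; auto).
  rewrite (integ_ext _ (fun x => (x - x0) * (l x * l x * w x))) in O by (intros; rewrite P_eq; ring).
  destruct (monic_nonvanishing N l l_monic) as [y [Hy Hly]].
  assert (Lp : 0 < l y * l y) by (destruct (Rlt_dec 0 (l y)); nra).
  assert (Wy : 0 < l y * l y * w y) by (specialize (w_pos y ltac:(lra)); nra).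
  assert (Wx : forall x, -1 <= x <= 1 -> 0 <= l x * l x * w x)
    by (intros x Hx; specialize (w_pos x Hx); nra).
  split; apply Rnot_le_lt; intros Hx0.
  - enough (0 < integ (fun x => (x - x0) * (l x * l x * w x))) by lra.
    apply (integ_pos _ y); [cont_pm1_tac| |exact Hy|apply Rmult_lt_0_compat; lra].
    intros x Hx. specialize (Wx x Hx). apply Rmult_le_pos; lra.
  - enough (0 < integ (fun x => (-1) * ((x - x0) * (l x * l x * w x)))) as H.
    { rewrite integ_scal in H by cont_pm1_tac. lra. }
    apply (integ_pos _ y); [cont_pm1_tac| |exact Hy|].
    + intros x Hx. specialize (Wx x Hx).
      replace (-1 * ((x - x0) * (l x * l x * w x))) with ((x0 - x) * (l x * l x * w x)) by ring.
      apply Rmult_le_pos; lra.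
    + replace (-1 * ((y - x0) * (l y * l y * w y))) with ((x0 - y) * (l y * l y * w y)) by ring.
      apply Rmult_lt_0_compat; lra.
Qed.

End ZeroFactor.

Section Interlacing.
Variables (N : nat) (P Q : R -> R) (lam mu : nat -> R).
Hypotheses (P_orth : monic_orth_poly w (S N) P) (Q_orth : monic_orth_poly w N Q)
  (P_zeros : sorted_zeros P N lam) (Q_zeros : sorted_zeros Q (N - 1) mu).

Lemma orth_prev_sign_at_zero j : (j <= N)%nat -> 0 < Q (lam j) * lagrange_num lam N j (lam j).
Proof.
  intros Hj. destruct (lagrange_num_factor lam N (proj1 P_zeros) P (proj1 P_orth) P_zeros j Hj)
    as [Hl El].
  set (l := lagrange_num lam N j) in *.
  assert (A1 := orth_factor_integ N P l (lam j) P_orth El Hl Q (monic_deg_lt _ _ (proj1 Q_orth))).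
  rewrite (orth_integ_monic N Q l Q_orth Hl) in A1.
  assert (A2 := integ_sq_pos N Q (proj1 Q_orth)).
  assert (A3 := christoffel_pos N P l (lam j) P_orth El Hl).
  set (J := integ (fun x => l x * w x)) in *.
  assert (0 < (Q (lam j) * l (lam j)) * (J * J)) by nra.
  destruct (Rle_lt_dec (Q (lam j) * l (lam j)) 0); [|assumption].
  assert (0 <= J * J) by nra. nra.
Qed.

Lemma interlacing : (1 <= N)%nat -> forall k, (k <= N - 1)%nat -> lam k < mu k < lam (S k).
Proof.
  intros HN. apply (sorted_zeros_bracketed Q (N - 1) mu lam (fun j => lam (S j)) Q_zeros).
  { intros. lra. }
  intros j Hj. apply (deg_lt_IVT (S N)); [apply monic_deg_lt, Q_orth|apply P_zeros; lia|].
  assert (E := lagrange_num_self_alternate lam N (proj1 P_zeros) j ltac:(lia)).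
  assert (S1 := orth_prev_sign_at_zero j ltac:(lia)).
  assert (S2 := orth_prev_sign_at_zero (S j) ltac:(lia)).
  set (a1 := lagrange_num lam N j (lam j)) in *.
  set (a2 := lagrange_num lam N (S j) (lam (S j))) in *.
  destruct (Rlt_dec (Q (lam j) * Q (lam (S j))) 0) as [|Hge]; [assumption|].
  assert (0 < (Q (lam j) * a1) * (Q (lam (S j)) * a2)) by nra. nra.
Qed.

End Interlacing.

Definition gauss_weight (lam : nat -> R) (N k : nat) : R :=
  integ (fun x => lagrange_num lam N k x * w x) / lagrange_num lam N k (lam k).

Section Quadrature.
Variables (N : nat) (P : R -> R) (lam : nat -> R).
Hypotheses (P_orth : monic_orth_poly w (S N) P) (P_zeros : sorted_zeros P N lam).

Let lam_incr : increasing_upto lam N := proj1 P_zeros.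
Let factor k (Hk : (k <= N)%nat) := lagrange_num_factor lam N lam_incr P (proj1 P_orth) P_zeros k Hk.

Lemma gauss_weight_pos k : (k <= N)%nat -> 0 < gauss_weight lam N k.
Proof.
  intros Hk. destruct (factor k Hk) as [Hl El].
  assert (A1 := christoffel_pos N P _ (lam k) P_orth El Hl).
  assert (A2 := lagrange_num_self_neq0 lam N lam_incr k Hk).
  unfold gauss_weight. set (u := lagrange_num lam N k (lam k)) in *.
  set (J := integ _) in *.
  replace (J / u) with ((u * J) / (u * u)) by (field; auto).
  apply Rdiv_lt_0_compat; [exact A1|]. destruct (Rlt_dec 0 u); nra.
Qed.

(* [f] minus its interpolant at the zeros of [P] is [P] times a polynomial of degree
   [<= N], hence has integral zero. *)
Lemma gauss_quadrature f : deg_lt (S N + S N) f ->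
  integ (fun x => f x * w x) = sum_f_R0 (fun k => f (lam k) * gauss_weight lam N k) N.
Proof.
  intros Hf.
  assert (Hl : forall k, (k <= N)%nat -> deg_lt (S N) (lagrange_num lam N k))
    by (intros k Hk; apply monic_deg_lt, (factor k Hk)).
  assert (Cl : forall k, (k <= N)%nat -> cont_pm1 (lagrange_num lam N k))
    by (intros k Hk; apply (cont_pm1_deg_lt (S N)), Hl, Hk).
  set (c := fun k => f (lam k) / lagrange_num lam N k (lam k)).
  set (S0 := fun x => sum_f_R0 (fun k => c k * lagrange_num lam N k x) N).
  assert (HS0 : deg_lt (S N) S0) by (apply deg_lt_sum; intros k Hk; apply deg_lt_scal, Hl, Hk).
  assert (Hnode : forall i, (i <= N)%nat -> f (lam i) - S0 (lam i) = 0).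
  { intros i Hi. unfold S0. rewrite (sum_f_R0_single _ N i Hi).
    - unfold c. field. apply lagrange_num_self_neq0; auto.
    - intros k Hk Hki. rewrite (lagrange_num_node lam N lam_incr P (proj1 P_orth) P_zeros) by auto. ring. }
  destruct (deg_lt_vanish_factor (S N) (S N) (fun x => f x - S0 x) lam) as [s [Hs Es]].
  { apply deg_lt_minus; [exact Hf|apply (deg_lt_le (S N)); [lia|exact HS0]]. }
  { intros i j Hi Hj. apply (increasing_inj lam N lam_incr); lia. }
  { intros i Hi. apply Hnode. lia. }
  assert (EP : forall x, P x = rprod (S N) (fun i => x - lam i)).
  { apply (monic_eq_rprod (S N) P lam (proj1 P_orth)).
    - intros i j Hi Hj. apply (increasing_inj lam N lam_incr); lia.
    - intros i Hi. apply P_zeros. lia. }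
  assert (CP : cont_pm1 P) by (apply (cont_pm1_deg_lt (S (S N))), monic_deg_lt, P_orth).
  assert (Cs : cont_pm1 s) by (apply (cont_pm1_deg_lt (S N)), Hs).
  rewrite (integ_ext _ (fun x => P x * s x * w x +
                                 sum_f_R0 (fun k => c k * (lagrange_num lam N k x * w x)) N)).
  - rewrite integ_plus, (orth_integ_deg_lt (S N) P s P_orth Hs), integ_sum.
    + rewrite Rplus_0_l. apply sum_eq. intros k Hk.
      rewrite integ_scal by (cont_pm1_tac; apply Cl, Hk). unfold c, gauss_weight. field.
      apply lagrange_num_self_neq0; auto.
    + intros k Hk. specialize (Cl k Hk). cont_pm1_tac.
    + cont_pm1_tac.
    + apply cont_pm1_sum. intros k Hk. specialize (Cl k Hk). cont_pm1_tac.
  - intros x _. replace (f x) with (P x * s x + S0 x) by (rewrite EP, <- Es; ring).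
    unfold S0. rewrite Rmult_plus_distr_r, (Rmult_comm (sum_f_R0 _ N)), scal_sum.
    f_equal. apply sum_eq. intros. ring.
Qed.

End Quadrature.

Section OrthogonalBasis.
Variable phi : nat -> R -> R.
Hypothesis phi_orth : forall j, monic_orth_poly w j (phi j).

Definition orth_sqnorm (j : nat) : R := integ (fun x => phi j x * phi j x * w x).

Definition orth_coef (q : R -> R) (j : nat) : R := integ (fun x => q x * phi j x * w x) / orth_sqnorm j.

Lemma cont_pm1_orth_basis j : cont_pm1 (phi j).
Proof. apply (cont_pm1_deg_lt (S j)), monic_deg_lt, phi_orth. Qed.

Lemma orth_sqnorm_pos j : 0 < orth_sqnorm j.
Proof. apply (integ_sq_pos j), phi_orth. Qed.

Lemma orth_basis_orth i j : i <> j -> integ (fun x => phi i x * phi j x * w x) = 0.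
Proof.
  intros Hij. destruct (Nat.lt_ge_cases j i).
  - apply (orth_integ_deg_lt i); [apply phi_orth|].
    apply (deg_lt_le (S j)); [lia|apply monic_deg_lt, phi_orth].
  - rewrite (integ_ext _ (fun x => phi j x * phi i x * w x)) by (intros; ring).
    apply (orth_integ_deg_lt j); [apply phi_orth|].
    apply (deg_lt_le (S i)); [lia|apply monic_deg_lt, phi_orth].
Qed.

Lemma orth_expand n q : deg_lt (S n) q ->
  forall x, q x = sum_f_R0 (fun j => orth_coef q j * phi j x) n.
Proof.
  intros Hq. assert (Cphi := cont_pm1_orth_basis).
  destruct (monic_basis_span phi (fun j => proj1 (phi_orth j)) n q Hq) as [d Hd].
  intros x. rewrite Hd. apply sum_eq. intros i Hi. f_equal.
  unfold orth_coef.
  rewrite (integ_ext _ (fun y => sum_f_R0 (fun j => d j * (phi j y * phi i y * w y)) n)).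
  - rewrite integ_sum, (sum_f_R0_single _ n i Hi), integ_scal by (try cont_pm1_tac;
      try (intros k Hk Hki; rewrite integ_scal, orth_basis_orth by (auto; cont_pm1_tac); ring);
      intros; cont_pm1_tac).
    unfold orth_sqnorm. field. apply Rgt_not_eq, orth_sqnorm_pos.
  - intros y _. rewrite Hd, Rmult_assoc, (Rmult_comm (sum_f_R0 _ n)), scal_sum.
    apply sum_eq. intros. ring.
Qed.

Definition orth_coef_norm (n : nat) (q : R -> R) : R := sum_f_R0 (fun j => Rabs (orth_coef q j)) n.

Lemma orth_coef_norm_nonneg n q : 0 <= orth_coef_norm n q.
Proof. apply cond_pos_sum. intros. apply Rabs_pos. Qed.

Lemma orth_expand_abs_le n q B : deg_lt (S n) q ->
  (forall j x, (j <= n)%nat -> -1 <= x <= 1 -> Rabs (phi j x) <= B) ->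
  forall x, -1 <= x <= 1 -> Rabs (q x) <= orth_coef_norm n q * B.
Proof.
  intros Hq HB x Hx. rewrite (orth_expand n q Hq). apply sum_f_R0_abs_le. auto.
Qed.

End OrthogonalBasis.

End OrthogonalPolynomials.

(** * The weights [omega] and [omegat] *)

Lemma one_plus_mul_pos a x : -1 < a < 1 -> -1 <= x <= 1 -> 0 < 1 + a * x.
Proof. intros Ha Hx. destruct (Rle_lt_dec 0 a); nra. Qed.

Lemma cont_pm1_inv_pow a n : -1 < a < 1 -> cont_pm1 (fun y => / (1 + a * y) ^ n).
Proof.
  intros Ha. apply cont_pm1_inv.
  - apply (cont_pm1_deg_lt (S n)). induction n as [|n IH]; simpl; [apply deg_lt_const|].
    apply (deg_lt_ext _ (fun y => (1 + a * y) ^ n + a * (y * (1 + a * y) ^ n))); [intros; ring|].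
    apply deg_lt_plus; [apply deg_lt_S, IH|apply deg_lt_scal, deg_lt_mulX, IH].
  - intros x Hx. apply pow_nonzero. assert (0 < 1 + a * x) by (apply one_plus_mul_pos; auto). lra.
Qed.

Lemma cont_pm1_omega a : -1 < a < 1 -> cont_pm1 (omega a).
Proof. apply cont_pm1_inv_pow. Qed.

Lemma cont_pm1_omegat a : -1 < a < 1 -> cont_pm1 (omegat a).
Proof. apply cont_pm1_inv_pow. Qed.

Lemma omegat_pos a x : -1 < a < 1 -> -1 <= x <= 1 -> 0 < omegat a x.
Proof. intros Ha Hx. apply Rinv_0_lt_compat, pow_lt, one_plus_mul_pos; auto. Qed.

Lemma omega_eq a x : -1 < a < 1 -> -1 <= x <= 1 -> omega a x = (1 + a * x) * omegat a x.
Proof.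
  intros Ha Hx. assert (0 < 1 + a * x) by (apply one_plus_mul_pos; auto).
  unfold omega, omegat. field. lra.
Qed.

Section ExtremeZeros.
Variables (a : R) (N : nat) (P : R -> R) (lam : nat -> R).
Hypotheses (Ha : -1 < a < 1) (HN : (1 <= N)%nat)
  (P_orth : monic_orth_poly (omegat a) (S N) P) (P_zeros : sorted_zeros P N lam).

Let Cw := cont_pm1_omegat a Ha.
Let Pw : forall x, -1 <= x <= 1 -> 0 < omegat a x := fun x => omegat_pos a x Ha.

Lemma zeros_inside k : (k <= N)%nat -> -1 < lam k < 1.
Proof.
  intros Hk. destruct (lagrange_num_factor lam N (proj1 P_zeros) P (proj1 P_orth) P_zeros k Hk)
    as [Hl El].
  exact (orth_zero_inside _ Cw Pw N P _ (lam k) P_orth El Hl).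
Qed.

(* [omega = (1 + a x) omegat], and [(x - c)(1 + a x)] is exactly integrated by the
   Gauss rule of [omegat] since [3 <= 2 N + 2]. *)
Lemma first_moment_quadrature c :
  integ (fun x => (x - c) * omega a x) =
  sum_f_R0 (fun k => (lam k - c) * (1 + a * lam k) * gauss_weight (omegat a) lam N k) N.
Proof.
  rewrite (integ_ext _ (fun x => (x - c) * (1 + a * x) * omegat a x))
    by (intros x Hx; rewrite omega_eq by auto; ring).
  apply (gauss_quadrature _ Cw N P lam P_orth P_zeros).
  apply (deg_lt_le 3); [lia|].
  apply (deg_lt_ext 3 (fun x => a * x ^ 2 + ((1 - a * c) * x ^ 1 + (- c) * x ^ 0)));
    [intros; simpl; ring|].
  apply deg_lt_plus; [apply deg_lt_monomial|apply deg_lt_plus].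
  - apply (deg_lt_le 2); [lia|apply deg_lt_monomial].
  - apply (deg_lt_le 1); [lia|apply deg_lt_monomial].
Qed.

Let lam_range k : (k <= N)%nat -> lam 0%nat <= lam k <= lam N.
Proof. intros Hk. split; apply (increasing_le lam N (proj1 P_zeros)); lia. Qed.

Let lin_pos k : (k <= N)%nat -> 0 < 1 + a * lam k.
Proof. intros Hk. apply one_plus_mul_pos; [|pose proof (zeros_inside k Hk)]; lra. Qed.

Let weight_pos := gauss_weight_pos _ Cw Pw N P lam P_orth P_zeros.

Lemma first_moment_above_min : 0 < integ (fun x => (x - lam 0%nat) * omega a x).
Proof.
  assert (lam 0%nat < lam N) by (apply (increasing_lt lam N (proj1 P_zeros)); lia).
  rewrite first_moment_quadrature.
  eapply Rlt_le_trans; [|apply (sum_f_R0_ge_term _ N N); [lia|]].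
  - apply Rmult_lt_0_compat; [apply Rmult_lt_0_compat|]; auto; lra.
  - intros k Hk. pose proof (lam_range k Hk). pose proof (lin_pos k Hk). pose proof (weight_pos k Hk).
    apply Rmult_le_pos; [apply Rmult_le_pos|]; lra.
Qed.

Lemma first_moment_below_max : integ (fun x => (x - lam N) * omega a x) < 0.
Proof.
  enough (0 < -1 * integ (fun x => (x - lam N) * omega a x)) by lra.
  assert (lam 0%nat < lam N) by (apply (increasing_lt lam N (proj1 P_zeros)); lia).
  rewrite first_moment_quadrature, scal_sum.
  eapply Rlt_le_trans; [|apply (sum_f_R0_ge_term _ N 0); [lia|]].
  - pose proof (lin_pos 0%nat ltac:(lia)). pose proof (weight_pos 0%nat ltac:(lia)).
    assert (0 < (lam N - lam 0%nat) * (1 + a * lam 0%nat) * gauss_weight (omegat a) lam N 0)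
      by (apply Rmult_lt_0_compat; [apply Rmult_lt_0_compat|]; lra).
    lra.
  - intros k Hk. pose proof (lam_range k Hk). pose proof (lin_pos k Hk). pose proof (weight_pos k Hk).
    assert (0 <= (lam N - lam k) * (1 + a * lam k) * gauss_weight (omegat a) lam N k)
      by (apply Rmult_le_pos; [apply Rmult_le_pos|]; lra).
    lra.
Qed.

Lemma ratio_between_extreme_zeros A B :
  RInt_eq (fun mu => mu * omega a mu) (-1) 1 A -> RInt_eq (fun mu => omega a mu) (-1) 1 B ->
  0 < B /\ lam 0%nat < A / B < lam N.
Proof.
  intros HA%RInt_eq_integ HB%RInt_eq_integ.
  assert (Cw' := cont_pm1_omega a Ha).
  assert (E : forall c, A - c * B = integ (fun x => (x - c) * omega a x)).
  { intros c. rewrite <- HA, <- HB, <- integ_scal, <- integ_minus by cont_pm1_tac.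
    apply integ_ext. intros. ring. }
  assert (Bpos : 0 < B).
  { rewrite <- HB. apply (integ_pos _ 0); [exact Cw'| |lra|].
    - intros x Hx. rewrite omega_eq by auto. left.
      apply Rmult_lt_0_compat; [apply one_plus_mul_pos|apply Pw]; auto.
    - rewrite omega_eq by lra. apply Rmult_lt_0_compat; [apply one_plus_mul_pos|apply Pw]; lra. }
  assert (Lo := first_moment_above_min). assert (Hi := first_moment_below_max).
  rewrite <- E in Lo, Hi.
  split; [exact Bpos|].
  split; apply Rmult_lt_reg_r with B; auto; unfold Rdiv; rewrite Rmult_assoc, Rinv_l; lra.
Qed.

End ExtremeZeros.

(* Only the [i = 0] term survives: [phi i] is orthogonal to [1] for [i >= 1] and to [mu]
   for [i >= 2], while [f 1 = 0] kills the remaining term of [E1]. *)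
Lemma ansatz_moments a N (phi : nat -> R -> R) (f : nat -> R) E0 E1 : -1 < a < 1 ->
  (forall k, monic_orth_poly (omega a) k (phi k)) -> f 1%nat = 0 ->
  RInt_eq (fun mu => sum_f_R0 (fun i => f i * omega a mu * phi i mu) N) (-1) 1 E0 ->
  RInt_eq (fun mu => mu * sum_f_R0 (fun i => f i * omega a mu * phi i mu) N) (-1) 1 E1 ->
  E0 = f 0%nat * integ (omega a) /\ E1 = f 0%nat * integ (fun mu => mu * omega a mu).
Proof.
  intros Ha Hphi Hf1 H0%RInt_eq_integ H1%RInt_eq_integ.
  assert (Cw := cont_pm1_omega a Ha).
  assert (Cphi := cont_pm1_orth_basis _ phi Hphi).
  assert (Cpow : forall m, cont_pm1 (fun x => x ^ m))
    by (intros m; apply (cont_pm1_deg_lt (S m)), deg_lt_pow).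
  assert (P0 : forall x, phi 0%nat x = 1)
    by (intros x; destruct (proj1 (Hphi 0%nat)) as [c Hc]; rewrite Hc; simpl; ring).
  assert (Orth : forall k m, (m < k)%nat -> integ (fun x => phi k x * x ^ m * omega a x) = 0)
    by (intros k m Hm; apply RInt_eq_integ, Hphi, Hm).
  assert (Moment : forall m, (m <= 1)%nat ->
            integ (fun x => sum_f_R0 (fun i => f i * (phi i x * x ^ m * omega a x)) N)
            = f 0%nat * integ (fun x => x ^ m * omega a x)).
  { intros m Hm. rewrite integ_sum by (intros; cont_pm1_tac).
    rewrite (sum_f_R0_single _ N 0); [|lia|].
    - rewrite integ_scal by cont_pm1_tac. f_equal. apply integ_ext. intros. rewrite P0. ring.
    - intros k _ Hk0. rewrite integ_scal by cont_pm1_tac.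
      destruct (Nat.eq_dec k 1) as [->|Hk1]; [destruct m as [|m]|].
      + rewrite Orth by lia. ring.
      + rewrite Hf1. ring.
      + rewrite Orth by lia. ring. }
  split.
  - rewrite <- H0, (integ_ext (omega a) (fun x => x ^ 0 * omega a x)) by (intros; simpl; ring).
    rewrite <- (Moment 0%nat) by lia.
    apply integ_ext. intros. apply sum_eq. intros. simpl. ring.
  - rewrite <- H1, (integ_ext (fun mu => mu * omega a mu) (fun x => x ^ 1 * omega a x))
      by (intros; simpl; ring).
    rewrite <- (Moment 1%nat) by lia.
    apply integ_ext. intros. rewrite scal_sum. apply sum_eq. intros. simpl. ring.
Qed.

(** * Implicit differentiation *)

Lemma quotient_close A0 B0 eps : B0 <> 0 -> 0 < eps -> exists eta, 0 < eta /\ eta <= Rabs B0 / 2 /\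
  forall A B, Rabs (A - A0) < eta -> Rabs (B - B0) < eta -> Rabs (A / B - A0 / B0) < eps.
Proof.
  intros HB He. assert (Hb : 0 < Rabs B0) by (apply Rabs_pos_lt; auto).
  assert (Ha : 0 <= Rabs A0) by apply Rabs_pos.
  set (c := eps * (Rabs B0 * Rabs B0) / (4 * (Rabs A0 + Rabs B0))).
  assert (Hc : 0 < c) by (unfold c; apply Rdiv_lt_0_compat; [apply Rmult_lt_0_compat; nra|lra]).
  exists (Rmin (Rabs B0 / 2) c). split; [apply Rmin_pos; lra|]. split; [apply Rmin_l|].
  intros A B H1 H2. assert (E1 := Rmin_r (Rabs B0 / 2) c). assert (E2 := Rmin_l (Rabs B0 / 2) c).
  set (eta := Rmin (Rabs B0 / 2) c) in *.
  assert (HBb : Rabs B0 / 2 <= Rabs B).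
  { assert (Rabs B0 <= Rabs B + Rabs (B - B0)); [|lra].
    replace B0 with (B - (B - B0)) at 1 by ring. eapply Rle_trans; [apply Rabs_triang|].
    rewrite Rabs_Ropp. lra. }
  assert (HBn : B <> 0) by (intros ->; rewrite Rabs_R0 in HBb; lra).
  replace (A / B - A0 / B0) with (((A - A0) * B0 - A0 * (B - B0)) / (B * B0)) by (field; auto).
  unfold Rdiv. rewrite Rabs_mult, Rabs_inv, Rabs_mult.
  assert (N1 : Rabs ((A - A0) * B0 - A0 * (B - B0)) <= eta * (Rabs B0 + Rabs A0)).
  { eapply Rle_trans; [apply Rabs_triang|]. rewrite Rabs_Ropp, !Rabs_mult.
    assert (Rabs (A - A0) * Rabs B0 <= eta * Rabs B0) by (apply Rmult_le_compat_r; lra).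
    assert (Rabs A0 * Rabs (B - B0) <= Rabs A0 * eta) by (apply Rmult_le_compat_l; lra). lra. }
  assert (N2 : eta * (Rabs B0 + Rabs A0) <= eps * (Rabs B0 * Rabs B0) / 4).
  { apply Rle_trans with (c * (Rabs B0 + Rabs A0)); [apply Rmult_le_compat_r; lra|].
    right. unfold c. field. lra. }
  assert (D1 : / (Rabs B * Rabs B0) <= / (Rabs B0 * Rabs B0 / 2)) by (apply Rinv_le_contravar; nra).
  apply Rle_lt_trans with (eps * (Rabs B0 * Rabs B0) / 4 * / (Rabs B0 * Rabs B0 / 2)).
  - apply Rmult_le_compat; try lra; [apply Rabs_pos|left; apply Rinv_0_lt_compat; nra].
  - replace (eps * (Rabs B0 * Rabs B0) / 4 * / (Rabs B0 * Rabs B0 / 2)) with (eps / 2)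
      by (field; lra). lra.
Qed.

Lemma mul_frac_lt c t : 0 <= c -> 0 < t -> c * (t / (c + 1)) < t.
Proof.
  intros Hc Ht. replace (c * (t / (c + 1))) with (t - t / (c + 1)) by (field; lra).
  assert (0 < t / (c + 1)) by (apply Rdiv_lt_0_compat; lra). lra.
Qed.

Section ImplicitDerivative.
Variables (y : R -> R) (a : R) (F : R -> R -> R) (F0 G : R -> R) (C d1 L1 L2 : R).
Hypotheses (y_inside : -1 < y a < 1)
  (y_cont : forall e, 0 < e -> exists d, 0 < d /\ forall b, 0 < Rabs (b - a) < d -> Rabs (y b - y a) < e)
  (Hd1 : 0 < d1) (HC : 0 <= C) (HL1 : 0 <= L1) (HL2 : 0 <= L2)
  (F_close : forall b x, 0 < Rabs (b - a) < d1 -> -1 <= x <= 1 -> Rabs (F b x - F0 x) <= C * Rabs (b - a))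
  (F0_lip : forall x, -1 <= x <= 1 -> Rabs (F0 x - F0 (y a)) <= L1 * Rabs (x - y a))
  (G_lip : forall x, -1 <= x <= 1 -> Rabs (G x - G (y a)) <= L2 * Rabs (x - y a)).

Lemma implicit_values_close eta : 0 < eta -> exists d, 0 < d /\ forall b, 0 < Rabs (b - a) < d ->
  Rabs (F b (y b) - F0 (y a)) < eta /\ Rabs (G (y b) - G (y a)) < eta.
Proof.
  intros Heta. set (x0 := y a) in *.
  set (e := Rmin (Rmin (x0 + 1) (1 - x0)) (Rmin ((eta / 2) / (L1 + 1)) (eta / (L2 + 1)))).
  assert (He : 0 < e) by (unfold e; repeat apply Rmin_pos; try apply Rdiv_lt_0_compat; lra).
  assert (He1 : e <= x0 + 1 /\ e <= 1 - x0)
    by (split; eapply Rle_trans; try apply Rmin_l; try apply Rmin_r; apply Rmin_l).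
  assert (He2 : L1 * e < eta / 2).
  { eapply Rle_lt_trans; [|apply (mul_frac_lt L1 (eta / 2)); lra].
    apply Rmult_le_compat_l; [lra|]. eapply Rle_trans; [apply Rmin_r|apply Rmin_l]. }
  assert (He3 : L2 * e < eta).
  { eapply Rle_lt_trans; [|apply (mul_frac_lt L2 eta); lra].
    apply Rmult_le_compat_l; [lra|]. eapply Rle_trans; [apply Rmin_r|apply Rmin_r]. }
  destruct (y_cont e He) as [d [Hd Hdd]].
  exists (Rmin (Rmin d d1) ((eta / 2) / (C + 1))).
  split; [repeat apply Rmin_pos; try apply Rdiv_lt_0_compat; lra|].
  intros b Hb.
  assert (Hb' : 0 < Rabs (b - a) < d /\ 0 < Rabs (b - a) < d1 /\ Rabs (b - a) < (eta / 2) / (C + 1)).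
  { repeat split; try apply Hb; eapply Rlt_le_trans; try apply Hb;
      [eapply Rle_trans; apply Rmin_l|eapply Rle_trans; [apply Rmin_l|apply Rmin_r]|apply Rmin_r]. }
  destruct Hb' as [Hbd [Hbd1 Hbeta]].
  assert (Hy : Rabs (y b - x0) < e) by (apply Hdd, Hbd).
  assert (Hyin : -1 <= y b <= 1) by (apply Rabs_def2 in Hy; lra).
  split.
  - replace (F b (y b) - F0 x0) with ((F b (y b) - F0 (y b)) + (F0 (y b) - F0 x0)) by ring.
    eapply Rle_lt_trans; [apply Rabs_triang|].
    assert (Rabs (F0 (y b) - F0 x0) <= L1 * e)
      by (eapply Rle_trans; [apply F0_lip, Hyin|apply Rmult_le_compat_l; lra]).
    assert (C * Rabs (b - a) < eta / 2).
    { eapply Rle_lt_trans; [|apply (mul_frac_lt C (eta / 2)); lra].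
      apply Rmult_le_compat_l; lra. }
    assert (Rabs (F b (y b) - F0 (y b)) <= C * Rabs (b - a)) by (apply F_close; auto). lra.
  - eapply Rle_lt_trans; [apply G_lip, Hyin|].
    apply Rle_lt_trans with (L2 * e); [apply Rmult_le_compat_l; lra|exact He3].
Qed.

(* The hypothesis [(y b - y a) G (y b) = - (b - a) F b (y b)] is [Q_b (y b) = 0] for
   [Q_b = Q_a + (b - a) F b] with [Q_a = (x - y a) G]. *)
Lemma derivable_pt_lim_implicit :
  G (y a) <> 0 ->
  (forall b, 0 < Rabs (b - a) < d1 -> (y b - y a) * G (y b) = - (b - a) * F b (y b)) ->
  derivable_pt_lim y a (- (F0 (y a) / G (y a))).
Proof.
  intros HG0 Hid eps Heps.
  destruct (quotient_close (F0 (y a)) (G (y a)) eps HG0 Heps) as [eta [Heta [Heta2 Hq]]].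
  destruct (implicit_values_close eta Heta) as [d [Hd Hdd]].
  assert (Hdel : 0 < Rmin d d1) by (apply Rmin_pos; lra).
  exists (mkposreal _ Hdel). intros h Hh0 Hhd. simpl in Hhd.
  assert (Hh : 0 < Rabs (a + h - a)) by (replace (a + h - a) with h by ring; apply Rabs_pos_lt, Hh0).
  assert (Hhd' : Rabs (a + h - a) < d /\ Rabs (a + h - a) < d1).
  { replace (a + h - a) with h by ring.
    split; eapply Rlt_le_trans; [exact Hhd|apply Rmin_l|exact Hhd|apply Rmin_r]. }
  set (b := a + h) in *.
  destruct (Hdd b ltac:(lra)) as [HFy HGy].
  assert (HGyn : G (y b) <> 0) by (intros E; rewrite E, Rminus_0_l, Rabs_Ropp in HGy; lra).
  replace ((y b - y a) / h) with (- (F b (y b) / G (y b))).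
  - replace (- (F b (y b) / G (y b)) - - (F0 (y a) / G (y a)))
      with (- (F b (y b) / G (y b) - F0 (y a) / G (y a))) by ring.
    rewrite Rabs_Ropp. apply Hq; assumption.
  - assert (E := Hid b ltac:(lra)). replace (b - a) with h in E by (unfold b; ring).
    field_simplify_eq; [|auto..]. lra.
Qed.

End ImplicitDerivative.

(** * Dependence on the parameter [a] *)

(* [omegat_dq a b] is the difference quotient of [- omegat] in the parameter and
   [omegat_da a] its limit [- d omegat / d a]. *)
Definition omegat_dq (a b mu : R) : R := (omegat a mu - omegat b mu) / (b - a).
Definition omegat_da (a mu : R) : R := 5 * mu / (1 + a * mu) ^ 6.

Lemma omegat_dq_formula a b mu : b <> a -> 0 < 1 + a * mu -> 0 < 1 + b * mu ->
  omegat_dq a b mu = mu * (let u := 1 + a * mu in let v := 1 + b * mu in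
     (v^4 + v^3*u + v^2*u^2 + v*u^3 + u^4) / (u^5 * v^5)).
Proof.
  intros Hab Hu Hv. unfold omegat_dq, omegat. simpl.
  field. repeat split; try lra; apply Rminus_eq_contra; exact Hab.
Qed.

Lemma omegat_dq_da_formula a b mu : b <> a -> 0 < 1 + a * mu -> 0 < 1 + b * mu ->
  omegat_dq a b mu - omegat_da a mu = mu * mu * (a - b) * (let u := 1 + a * mu in let v := 1 + b * mu in
     (5*v^4 + 4*u*v^3 + 3*u^2*v^2 + 2*u^3*v + u^4) / (u^6 * v^5)).
Proof.
  intros Hab Hu Hv. unfold omegat_dq, omegat_da, omegat. simpl.
  field. repeat split; try lra; apply Rminus_eq_contra; exact Hab.
Qed.

Lemma param_near a b : -1 < a < 1 -> Rabs (b - a) < (1 - Rabs a) / 2 ->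
  -1 < b < 1 /\ forall mu, -1 <= mu <= 1 -> (1 - Rabs a) / 2 <= 1 + b * mu <= 2.
Proof.
  intros Ha Hb. assert (Rabs b <= Rabs a + Rabs (b - a)).
  { replace b with (a + (b - a)) at 1 by ring. apply Rabs_triang. }
  assert (Rabs a < 1) by (apply Rabs_def1; lra).
  assert (Hb' : Rabs b < 1 - (1 - Rabs a) / 2) by lra. apply Rabs_def2 in Hb'.
  split; [lra|]. intros mu Hmu. destruct (Rle_lt_dec 0 b); split; nra.
Qed.

Lemma monomial_bound (u v d : R) i j : 0 < d -> d <= u <= 2 -> d <= v <= 2 ->
  0 <= v ^ i * u ^ j <= 2 ^ (i + j) /\ d ^ (i + j) <= v ^ i * u ^ j.
Proof.
  intros Hd Hu Hv. rewrite !pow_add. repeat split.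
  - apply Rmult_le_pos; apply pow_le; lra.
  - apply Rmult_le_compat; try (apply pow_le; lra); apply pow_incr; lra.
  - apply Rmult_le_compat; try (apply pow_le; lra); apply pow_incr; lra.
Qed.

Lemma frac_bound (p q M D : R) : 0 <= p <= M -> 0 < D -> D <= q -> 0 <= p / q <= M / D.
Proof.
  intros Hp HD Hq. split; [apply Rdiv_le_0_compat; lra|].
  unfold Rdiv. apply Rmult_le_compat; try lra.
  - left. apply Rinv_0_lt_compat. lra.
  - apply Rinv_le_contravar; lra.
Qed.

Lemma omegat_dq_bounds a : -1 < a < 1 -> exists K K2, 0 <= K /\ 0 <= K2 /\
  forall b mu, 0 < Rabs (b - a) < (1 - Rabs a) / 2 -> -1 <= mu <= 1 ->
  Rabs (omegat_dq a b mu) <= K /\ Rabs (omegat_dq a b mu - omegat_da a mu) <= K2 * Rabs (b - a).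
Proof.
  intros Ha. set (d := (1 - Rabs a) / 2).
  assert (Hd : 0 < d) by (unfold d; assert (Rabs a < 1) by (apply Rabs_def1; lra); lra).
  exists (80 / d ^ 10), (240 / d ^ 11).
  split; [apply Rdiv_le_0_compat; [lra|apply pow_lt, Hd]|].
  split; [apply Rdiv_le_0_compat; [lra|apply pow_lt, Hd]|].
  intros b mu Hb Hmu.
  assert (Hba : b <> a) by (intros ->; rewrite Rminus_diag, Rabs_R0 in Hb; lra).
  destruct (param_near a b Ha ltac:(apply Hb)) as [_ Hv].
  destruct (param_near a a Ha ltac:(rewrite Rminus_diag, Rabs_R0; fold d; lra)) as [_ Hu].
  specialize (Hv mu Hmu). specialize (Hu mu Hmu). fold d in Hu, Hv.
  assert (Hmu1 : Rabs mu <= 1) by (apply Rabs_le; lra).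
  rewrite (omegat_dq_da_formula a b mu), (omegat_dq_formula a b mu) by (auto; lra). cbv zeta.
  set (u := 1 + a * mu) in *. set (v := 1 + b * mu) in *.
  assert (N1 : 0 <= v^4 + v^3*u + v^2*u^2 + v*u^3 + u^4 <= 80).
  { destruct (monomial_bound u v d 4 0), (monomial_bound u v d 3 1), (monomial_bound u v d 2 2),
      (monomial_bound u v d 1 3), (monomial_bound u v d 0 4); auto. simpl in *. lra. }
  assert (N2 : 0 <= 5*v^4 + 4*u*v^3 + 3*u^2*v^2 + 2*u^3*v + u^4 <= 240).
  { destruct (monomial_bound u v d 4 0), (monomial_bound u v d 3 1), (monomial_bound u v d 2 2),
      (monomial_bound u v d 1 3), (monomial_bound u v d 0 4); auto. simpl in *. lra. }
  assert (D1 : d ^ 10 <= u ^ 5 * v ^ 5)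
    by (rewrite Rmult_comm; apply (monomial_bound u v d 5 5); auto).
  assert (D2 : d ^ 11 <= u ^ 6 * v ^ 5)
    by (rewrite Rmult_comm; apply (monomial_bound u v d 5 6); auto).
  destruct (frac_bound _ _ _ _ N1 (pow_lt d 10 Hd) D1) as [F0 F1].
  destruct (frac_bound _ _ _ _ N2 (pow_lt d 11 Hd) D2) as [G0 G1].
  assert (0 <= Rabs mu * Rabs mu <= 1) by (pose proof (Rabs_pos mu); split; nra).
  assert (0 <= Rabs (b - a)) by apply Rabs_pos.
  split.
  - rewrite Rabs_mult, (Rabs_right (_ / _)) by lra.
    replace (80 / d ^ 10) with (1 * (80 / d ^ 10)) by ring.
    apply Rmult_le_compat; auto using Rabs_pos.
  - rewrite !Rabs_mult, (Rabs_right (_ / _)), (Rabs_minus_sym a b) by lra.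
    replace (240 / d ^ 11 * Rabs (b - a)) with (1 * Rabs (b - a) * (240 / d ^ 11)) by ring.
    apply Rmult_le_compat; try nra.
Qed.

Lemma cont_pm1_omegat_da a : -1 < a < 1 -> cont_pm1 (omegat_da a).
Proof.
  intros Ha. assert (C := cont_pm1_inv_pow a 6 Ha).
  unfold omegat_da, Rdiv. cont_pm1_tac.
Qed.

Lemma cont_pm1_omegat_dq a b : -1 < a < 1 -> -1 < b < 1 -> cont_pm1 (omegat_dq a b).
Proof.
  intros Ha Hb. assert (Ca := cont_pm1_omegat a Ha). assert (Cb := cont_pm1_omegat b Hb).
  unfold omegat_dq, Rdiv. cont_pm1_tac.
Qed.

Lemma deg_lt_family_bounded n m (F : nat -> R -> R) : (forall j, (j <= n)%nat -> deg_lt m (F j)) ->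
  exists B, 0 <= B /\ forall j x, (j <= n)%nat -> -1 <= x <= 1 -> Rabs (F j x) <= B.
Proof.
  induction n as [|n IH]; intros H.
  - destruct (deg_lt_bounded m (F 0%nat)) as [B [HB HB']]; [apply H; lia|].
    exists B. split; [exact HB|]. intros j x Hj Hx. replace j with 0%nat by lia. auto.
  - destruct IH as [B1 [HB1 HB1']]; [intros; apply H; lia|].
    destruct (deg_lt_bounded m (F (S n))) as [B2 [HB2 HB2']]; [apply H; lia|].
    exists (Rmax B1 B2). split; [eapply Rle_trans; [exact HB1|apply Rmax_l]|].
    intros j x Hj Hx. destruct (Nat.eq_dec j (S n)) as [->|].
    + eapply Rle_trans; [apply HB2', Hx|apply Rmax_r].
    + eapply Rle_trans; [apply HB1'; auto; lia|apply Rmax_l].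
Qed.

Section ParamDerivative.
Variables (a : R) (N : nat) (phit : R -> nat -> R -> R).
Hypotheses (Ha : -1 < a < 1)
  (Hphit : forall b, -1 < b < 1 -> forall j, monic_orth_poly (omegat b) j (phit b j)).

Let w := omegat a.
Let phi := phit a.
Let P := phit a (S N).
Let Cw : cont_pm1 w := cont_pm1_omegat a Ha.
Let Pw : forall x, -1 <= x <= 1 -> 0 < w x := fun x => omegat_pos a x Ha.
Let phi_orth : forall j, monic_orth_poly w j (phi j) := Hphit a Ha.
Let Cphi : forall j, cont_pm1 (phi j) := cont_pm1_orth_basis w phi phi_orth.
Let Cda : cont_pm1 (omegat_da a) := cont_pm1_omegat_da a Ha.

Definition diffquot (b x : R) : R := (phit b (S N) x - phit a (S N) x) / (b - a).

(* The candidate for [d/da phit a (N+1)]: differentiating [int P q omegat = 0]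
   in [a] gives [int (dP/da) q omegat = int P q omegat_da] for [deg q <= N]. *)
Definition param_deriv (x : R) : R :=
  sum_f_R0 (fun j => integ (fun y => P y * phi j y * omegat_da a y) / orth_sqnorm w phi j * phi j x) N.

Lemma deg_lt_diffquot b : -1 < b < 1 -> deg_lt (S N) (diffquot b).
Proof.
  intros Hb. apply (deg_lt_ext _ (fun y => / (b - a) * (phit b (S N) y - phit a (S N) y)));
    [intros; unfold diffquot, Rdiv; ring|].
  apply deg_lt_scal, monic_minus_deg_lt; [apply Hphit, Hb|apply phi_orth].
Qed.

Lemma deg_lt_param_deriv : deg_lt (S N) param_deriv.
Proof.
  apply deg_lt_sum. intros k Hk. apply deg_lt_scal.
  apply (deg_lt_le (S k)); [lia|apply monic_deg_lt, phi_orth].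
Qed.

Lemma param_deriv_identity q : deg_lt (S N) q ->
  integ (fun x => param_deriv x * q x * w x) = integ (fun x => P x * q x * omegat_da a x).
Proof.
  intros Hq. assert (Eq := orth_expand w Cw Pw phi phi_orth N q Hq).
  assert (Cq : cont_pm1 q) by (apply (cont_pm1_deg_lt (S N)), Hq).
  assert (CP : cont_pm1 P) by apply Cphi.
  set (rs := fun j => integ (fun y => P y * phi j y * omegat_da a y) / orth_sqnorm w phi j).
  rewrite (integ_ext (fun x => param_deriv x * q x * w x)
             (fun x => sum_f_R0 (fun j => rs j * (q x * phi j x * w x)) N)).
  2:{ intros x _. unfold param_deriv. rewrite Rmult_assoc, (Rmult_comm (sum_f_R0 _ N)), scal_sum.
      apply sum_eq. intros. unfold rs. ring. }
  rewrite (integ_ext (fun x => P x * q x * omegat_da a x)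
             (fun x => sum_f_R0 (fun j => orth_coef w phi q j * (P x * phi j x * omegat_da a x)) N)).
  2:{ intros x _. rewrite Eq, (Rmult_comm (P x)), Rmult_assoc, (Rmult_comm (sum_f_R0 _ N)), scal_sum.
      apply sum_eq. intros. ring. }
  rewrite !integ_sum by (intros; cont_pm1_tac). apply sum_eq. intros j Hj.
  rewrite !integ_scal by cont_pm1_tac. unfold rs, orth_coef. field.
  apply Rgt_not_eq, orth_sqnorm_pos; auto.
Qed.

Lemma orth_coef_param_deriv j : (j <= N)%nat ->
  orth_coef w phi param_deriv j = integ (fun x => P x * phi j x * omegat_da a x) / orth_sqnorm w phi j.
Proof.
  intros Hj. unfold orth_coef. rewrite param_deriv_identity; [reflexivity|].
  apply (deg_lt_le (S j)); [lia|apply monic_deg_lt, phi_orth].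
Qed.

(* [P_b omegat_b] and [P_a omegat_a] are both orthogonal to [phi j]; what is left of
   [diffquot b * omegat_a] is [P_b] against the difference quotient of the weight. *)
Lemma orth_coef_diffquot b j : -1 < b < 1 -> b <> a -> (j <= N)%nat ->
  orth_coef w phi (diffquot b) j = integ (fun x => phit b (S N) x * phi j x * omegat_dq a b x) / orth_sqnorm w phi j.
Proof.
  intros Hb Hab Hj. unfold orth_coef. f_equal.
  assert (Hba : b - a <> 0) by (apply Rminus_eq_contra, Hab).
  assert (Cpb : cont_pm1 (phit b (S N))) by apply (cont_pm1_orth_basis _ _ (Hphit b Hb)).
  assert (Cwb := cont_pm1_omegat b Hb). assert (Cdq := cont_pm1_omegat_dq a b Ha Hb).
  assert (Hdeg : deg_lt (S N) (phi j)) by (apply (deg_lt_le (S j)); [lia|apply monic_deg_lt, phi_orth]).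
  rewrite (integ_ext _ (fun x => phit b (S N) x * phi j x * omegat_dq a b x +
      (/ (b - a) * (phit b (S N) x * phi j x * omegat b x) +
       (- / (b - a)) * (P x * phi j x * w x)))).
  - rewrite !integ_plus, !integ_scal, (orth_integ_deg_lt (omegat b) Cwb (S N) _ (phi j)),
      (orth_integ_deg_lt w Cw (S N) P (phi j)) by (auto; cont_pm1_tac). ring.
  - intros x _. unfold diffquot, omegat_dq, w, P, phi. field. exact Hba.
Qed.

Section Estimates.
Variables (K K2 Mphi MP Minv : R).
Hypotheses (HMphi : 0 <= Mphi)
  (dq_bound : forall b mu, 0 < Rabs (b - a) < (1 - Rabs a) / 2 -> -1 <= mu <= 1 ->
     Rabs (omegat_dq a b mu) <= K /\ Rabs (omegat_dq a b mu - omegat_da a mu) <= K2 * Rabs (b - a))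
  (phi_bound : forall j x, (j <= N)%nat -> -1 <= x <= 1 -> Rabs (phi j x) <= Mphi)
  (P_bound : forall x, -1 <= x <= 1 -> Rabs (P x) <= MP)
  (sqnorm_bound : forall j, (j <= N)%nat -> / orth_sqnorm w phi j <= Minv).

Variable b : R.
Hypothesis Hb : 0 < Rabs (b - a) < (1 - Rabs a) / 2.

Let Hb_in : -1 < b < 1 := proj1 (param_near a b Ha (proj2 Hb)).

Let Hab : b <> a.
Proof. intros E. pose proof (proj1 Hb) as Hb0. rewrite E, Rminus_diag, Rabs_R0 in Hb0. lra. Qed.

Let Cq : cont_pm1 (diffquot b) := cont_pm1_deg_lt _ _ (deg_lt_diffquot b Hb_in).
Let Cdq : cont_pm1 (omegat_dq a b) := cont_pm1_omegat_dq a b Ha Hb_in.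
Let CP : cont_pm1 P := Cphi (S N).

Lemma diffquot_abs_le x : -1 <= x <= 1 -> Rabs (diffquot b x) <= orth_coef_norm w phi N (diffquot b) * Mphi.
Proof.
  intros Hx. apply (orth_expand_abs_le w Cw Pw phi phi_orth N); auto.
  apply deg_lt_diffquot, Hb_in.
Qed.

(* [P_b = P + (b - a) diffquot b] splits the coefficients of [diffquot b]. *)
Lemma orth_coef_diffquot_split j : (j <= N)%nat ->
  orth_coef w phi (diffquot b) j =
  (integ (fun x => P x * phi j x * omegat_dq a b x) +
   (b - a) * integ (fun x => diffquot b x * phi j x * omegat_dq a b x)) * / orth_sqnorm w phi j.
Proof.
  intros Hj. rewrite orth_coef_diffquot by auto. unfold Rdiv. f_equal.
  rewrite <- integ_scal, <- integ_plus by cont_pm1_tac. apply integ_ext. intros x _.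
  unfold diffquot, P. field. apply Rminus_eq_contra, Hab.
Qed.

Let NN := INR (S N).

Lemma orth_coef_norm_diffquot_le :
  orth_coef_norm w phi N (diffquot b) <=
  NN * Minv * (2 * (MP * Mphi * K)) + Rabs (b - a) * (NN * Minv * (2 * (Mphi * Mphi * K))) * orth_coef_norm w phi N (diffquot b).
Proof.
  set (SR := orth_coef_norm w phi N (diffquot b)).
  apply Rle_trans with (sum_f_R0 (fun _ => Minv * (2 * (MP * Mphi * K) + Rabs (b - a) * (2 * (SR * Mphi * Mphi * K)))) N).
  - apply sum_Rle. intros j Hj. rewrite orth_coef_diffquot_split, Rabs_mult, Rmult_comm by exact Hj.
    assert (Hh := orth_sqnorm_pos w Cw Pw phi phi_orth j).
    rewrite Rabs_right by (apply Rle_ge, Rlt_le, Rinv_0_lt_compat, Hh).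
    apply Rmult_le_compat; [left; apply Rinv_0_lt_compat, Hh|apply Rabs_pos|auto|].
    eapply Rle_trans; [apply Rabs_triang|]. rewrite Rabs_mult.
    apply Rplus_le_compat; [|apply Rmult_le_compat_l; [apply Rabs_pos|]];
      apply integ_prod3_abs_le; try cont_pm1_tac; intros x Hx;
      (split; [|split; [apply phi_bound; auto|apply (dq_bound b x Hb Hx)]]).
    + apply P_bound, Hx.
    + apply diffquot_abs_le, Hx.
  - rewrite sum_cte. fold NN. right. unfold SR. ring.
Qed.

Lemma orth_coef_diffquot_close (SR : R) : orth_coef_norm w phi N (diffquot b) <= SR -> forall j, (j <= N)%nat ->
  Rabs (orth_coef w phi (diffquot b) j - orth_coef w phi param_deriv j) <=
  Minv * (2 * (MP * Mphi * K2) + 2 * (SR * Mphi * Mphi * K)) * Rabs (b - a).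
Proof.
  intros HSR j Hj.
  assert (Hh := orth_sqnorm_pos w Cw Pw phi phi_orth j).
  rewrite orth_coef_diffquot_split, orth_coef_param_deriv by exact Hj. unfold Rdiv.
  rewrite <- Rmult_minus_distr_r, Rabs_mult, Rmult_comm.
  rewrite (Rabs_right (/ _)) by (apply Rle_ge, Rlt_le, Rinv_0_lt_compat, Hh).
  replace (Minv * (2 * (MP * Mphi * K2) + 2 * (SR * Mphi * Mphi * K)) * Rabs (b - a))
    with (Minv * (2 * (MP * Mphi * (K2 * Rabs (b - a))) + Rabs (b - a) * (2 * (SR * Mphi * Mphi * K))))
    by ring.
  apply Rmult_le_compat; [left; apply Rinv_0_lt_compat, Hh|apply Rabs_pos|auto|].
  rewrite (integ_ext (fun x => P x * phi j x * omegat_da a x)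
             (fun x => P x * phi j x * omegat_dq a b x - P x * phi j x * (omegat_dq a b x - omegat_da a x)))
    by (intros; ring).
  rewrite integ_minus by cont_pm1_tac.
  replace (_ + _ - _) with (integ (fun x => P x * phi j x * (omegat_dq a b x - omegat_da a x)) +
                            (b - a) * integ (fun x => diffquot b x * phi j x * omegat_dq a b x)) by ring.
  eapply Rle_trans; [apply Rabs_triang|]. rewrite Rabs_mult.
  apply Rplus_le_compat; [|apply Rmult_le_compat_l; [apply Rabs_pos|]];
    apply integ_prod3_abs_le; try cont_pm1_tac; intros x Hx;
    (split; [|split; [apply phi_bound; auto|apply (dq_bound b x Hb Hx)]]).
  - apply P_bound, Hx.
  - eapply Rle_trans; [apply diffquot_abs_le, Hx|]. apply Rmult_le_compat_r; auto.
Qed.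

Lemma orth_coef_norm_diffquot_bounded : Rabs (b - a) * (NN * Minv * (2 * (Mphi * Mphi * K))) <= 1 / 2 ->
  orth_coef_norm w phi N (diffquot b) <= 2 * (NN * Minv * (2 * (MP * Mphi * K))).
Proof.
  intros Hbt. assert (H0 := orth_coef_norm_nonneg w phi N (diffquot b)).
  assert (H1 := orth_coef_norm_diffquot_le).
  set (SR := orth_coef_norm w phi N (diffquot b)) in *.
  assert (Rabs (b - a) * (NN * Minv * (2 * (Mphi * Mphi * K))) * SR <= 1 / 2 * SR)
    by (apply Rmult_le_compat_r; auto).
  lra.
Qed.

Lemma diffquot_param_deriv_close (SR : R) : orth_coef_norm w phi N (diffquot b) <= SR ->
  forall x, -1 <= x <= 1 -> Rabs (diffquot b x - param_deriv x) <=
    NN * (Minv * (2 * (MP * Mphi * K2) + 2 * (SR * Mphi * Mphi * K))) * Mphi * Rabs (b - a).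
Proof.
  intros HSR x Hx.
  rewrite (orth_expand w Cw Pw phi phi_orth N (diffquot b) (deg_lt_diffquot b Hb_in) x),
    (orth_expand w Cw Pw phi phi_orth N param_deriv deg_lt_param_deriv x), <- minus_sum.
  rewrite (sum_eq _ (fun j => (orth_coef w phi (diffquot b) j - orth_coef w phi param_deriv j) * phi j x))
    by (intros; ring).
  eapply Rle_trans; [apply sum_f_R0_abs_le; intros j Hj; apply phi_bound; auto|].
  replace (NN * (Minv * (2 * (MP * Mphi * K2) + 2 * (SR * Mphi * Mphi * K))) * Mphi * Rabs (b - a))
    with (sum_f_R0 (fun _ => Minv * (2 * (MP * Mphi * K2) + 2 * (SR * Mphi * Mphi * K)) * Rabs (b - a)) N * Mphi)
    by (rewrite sum_cte; unfold NN; ring).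
  apply Rmult_le_compat_r; [exact HMphi|]. apply sum_Rle. intros j Hj.
  apply orth_coef_diffquot_close; auto.
Qed.

End Estimates.

Lemma diffquot_uniform : exists d1 C, 0 < d1 /\ 0 <= C /\
  forall b, 0 < Rabs (b - a) < d1 -> forall x, -1 <= x <= 1 ->
  Rabs (diffquot b x - param_deriv x) <= C * Rabs (b - a) /\ Rabs (diffquot b x) <= C.
Proof.
  destruct (omegat_dq_bounds a Ha) as [K [K2 [HK [HK2 Hdq]]]].
  destruct (deg_lt_family_bounded N (S N) phi) as [Mphi [HMphi HMphi']].
  { intros j Hj. apply (deg_lt_le (S j)); [lia|apply monic_deg_lt, phi_orth]. }
  destruct (deg_lt_bounded (S (S N)) P) as [MP [HMP HMP']]; [apply monic_deg_lt, phi_orth|].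
  destruct (finite_upper_bound N (fun j => / orth_sqnorm w phi j)) as [Minv [HMinv HMinv']].
  assert (HNN : 0 < INR (S N)) by (apply lt_0_INR; lia).
  set (al := INR (S N) * Minv * (2 * (MP * Mphi * K))).
  set (be := INR (S N) * Minv * (2 * (Mphi * Mphi * K))).
  set (C3 := INR (S N) * (Minv * (2 * (MP * Mphi * K2) + 2 * (2 * al * Mphi * Mphi * K))) * Mphi).
  assert (Hal : 0 <= al) by (unfold al; repeat apply Rmult_le_pos; lra).
  assert (Hbe : 0 <= be) by (unfold be; repeat apply Rmult_le_pos; lra).
  assert (HC3 : 0 <= C3).
  { unfold C3. apply Rmult_le_pos; [apply Rmult_le_pos; [lra|]|lra].
    apply Rmult_le_pos; [lra|]. apply Rplus_le_le_0_compat; repeat apply Rmult_le_pos; lra. }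
  assert (Ha1 : 0 < (1 - Rabs a) / 2) by (assert (Rabs a < 1) by (apply Rabs_def1; lra); lra).
  exists (Rmin ((1 - Rabs a) / 2) ((1 / 2) / (be + 1))), (2 * al * Mphi + C3).
  split; [apply Rmin_pos; [lra|apply Rdiv_lt_0_compat; lra]|].
  split; [assert (0 <= 2 * al * Mphi) by (apply Rmult_le_pos; lra); lra|].
  intros b Hb x Hx.
  assert (Hb0 : 0 < Rabs (b - a) < (1 - Rabs a) / 2)
    by (split; [apply Hb|eapply Rlt_le_trans; [apply Hb|apply Rmin_l]]).
  assert (Hbt : Rabs (b - a) * be <= 1 / 2).
  { rewrite Rmult_comm. left. eapply Rle_lt_trans; [|apply (mul_frac_lt be (1 / 2)); lra].
    apply Rmult_le_compat_l; [lra|]. left. eapply Rlt_le_trans; [apply Hb|apply Rmin_r]. }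
  assert (HSR : orth_coef_norm w phi N (diffquot b) <= 2 * al)
    by (unfold al; eapply orth_coef_norm_diffquot_bounded; eauto).
  split.
  - eapply Rle_trans; [eapply diffquot_param_deriv_close with (K := K) (K2 := K2) (Mphi := Mphi) (MP := MP) (Minv := Minv) (SR := 2 * al); eauto|].
    fold C3. assert (0 <= 2 * al * Mphi * Rabs (b - a)) by (repeat apply Rmult_le_pos; try lra; apply Rabs_pos).
    rewrite Rmult_plus_distr_r. lra.
  - eapply Rle_trans; [eapply diffquot_abs_le; eauto|].
    assert (orth_coef_norm w phi N (diffquot b) * Mphi <= 2 * al * Mphi) by (apply Rmult_le_compat_r; auto).
    lra.
Qed.

Section AtZero.
Variables (l : R -> R) (x0 : R).
Hypotheses (l_monic : monic_poly N l) (P_eq : forall x, P x = (x - x0) * l x) (x0_inside : -1 < x0 < 1).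

Let P_orth : monic_orth_poly w (S N) P := phi_orth (S N).

(* Writing [mu / (1 + a mu) = x0 / (1 + a x0) + (mu - x0) / ((1 + a mu)(1 + a x0))], the
   first part integrates to zero against [P l omegat] and the second gives [P^2]. *)
Lemma param_deriv_integ_pos : 0 < integ (fun x => param_deriv x * l x * w x).
Proof.
  assert (Cl : cont_pm1 l) by (apply (cont_pm1_deg_lt (S N)), monic_deg_lt, l_monic).
  assert (CP : cont_pm1 P) by apply Cphi.
  assert (Hx1 : 0 < 1 + a * x0) by (apply one_plus_mul_pos; lra).
  assert (Cinv : cont_pm1 (fun x => / (1 + a * x))).
  { assert (C1 := cont_pm1_inv_pow a 1 Ha). simpl in C1. intros x Hx.
    apply (continuous_ext (fun y => / ((1 + a * y) * 1))); [intros; f_equal; ring|auto]. }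
  rewrite param_deriv_identity by apply monic_deg_lt, l_monic.
  rewrite (integ_ext _ (fun x => (5 * x0 / (1 + a * x0)) * (P x * l x * w x) +
                                 (5 / (1 + a * x0)) * (P x * P x * w x * / (1 + a * x)))).
  2:{ intros x Hx. assert (0 < 1 + a * x) by (apply one_plus_mul_pos; auto).
      unfold w, omegat, omegat_da. rewrite P_eq. field. lra. }
  rewrite integ_plus, !integ_scal, (orth_integ_deg_lt w Cw (S N) P l P_orth)
    by (try apply monic_deg_lt, l_monic; cont_pm1_tac).
  destruct (monic_nonvanishing (S N) P (proj1 P_orth)) as [y [Hy HPy]].
  assert (0 < integ (fun x => P x * P x * w x * / (1 + a * x))).
  { apply (integ_pos _ y); [cont_pm1_tac| |exact Hy|].
    - intros x Hx. assert (0 < 1 + a * x) by (apply one_plus_mul_pos; auto).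
      specialize (Pw x Hx). apply Rmult_le_pos; [apply Rmult_le_pos; [apply Rle_0_sqr|lra]|].
      left. apply Rinv_0_lt_compat. lra.
    - assert (0 < 1 + a * y) by (apply one_plus_mul_pos; lra). specialize (Pw y ltac:(lra)).
      apply Rmult_lt_0_compat; [apply Rmult_lt_0_compat; [apply Rlt_0_sqr; auto|lra]|].
      apply Rinv_0_lt_compat. lra. }
  assert (0 < 5 / (1 + a * x0)) by (apply Rdiv_lt_0_compat; lra).
  rewrite Rmult_0_r, Rplus_0_l. apply Rmult_lt_0_compat; auto.
Qed.

Lemma param_deriv_sign_at_zero : 0 < param_deriv x0 * l x0.
Proof.
  assert (A1 := orth_factor_integ w Cw N P l x0 P_orth P_eq l_monic param_deriv deg_lt_param_deriv).
  assert (A2 := christoffel_pos w Cw Pw N P l x0 P_orth P_eq l_monic).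
  assert (A3 := param_deriv_integ_pos).
  rewrite A1 in A3. set (J := integ (fun x => l x * w x)) in *.
  assert (0 < (param_deriv x0 * l x0) * (J * J)) by nra.
  destruct (Rle_lt_dec (param_deriv x0 * l x0) 0); [|assumption].
  assert (0 <= J * J) by apply Rle_0_sqr. nra.
Qed.

End AtZero.

End ParamDerivative.

Lemma same_sign_of_close p q : Rabs (p - q) < Rabs q -> 0 < p * q.
Proof.
  intros H. destruct (Rlt_dec 0 q).
  - rewrite (Rabs_right q) in H by lra. apply Rabs_def2 in H. apply Rmult_lt_0_compat; lra.
  - destruct (Req_dec q 0) as [->|].
    + rewrite Rabs_R0 in H. pose proof (Rabs_pos (p - 0)). lra.
    + rewrite (Rabs_left q) in H by lra. apply Rabs_def2 in H. nra.
Qed.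

Lemma zeros_perturbation (P Q : R -> R) m n (lam mu : nat -> R) e :
  0 < e -> deg_lt m Q -> sorted_zeros Q n mu ->
  (forall i, (i < n)%nat -> lam i + e <= lam (S i) - e) ->
  (forall i, (i <= n)%nat -> P (lam i - e) * P (lam i + e) < 0) ->
  (forall i s, (i <= n)%nat -> s = e \/ s = - e ->
     Rabs (Q (lam i + s) - P (lam i + s)) < Rabs (P (lam i + s))) ->
  forall i, (i <= n)%nat -> Rabs (mu i - lam i) < e.
Proof.
  intros He HQ Hmu Hsep Hsign Hclose i Hi.
  enough (lam i - e < mu i < lam i + e) by (apply Rabs_def1; lra).
  apply (sorted_zeros_bracketed Q n mu (fun j => lam j - e) (fun j => lam j + e) Hmu Hsep); [|exact Hi].
  intros j Hj. apply (deg_lt_IVT m); [exact HQ|lra|].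
  assert (S1 := same_sign_of_close _ _ (Hclose j (- e) Hj (or_intror eq_refl))).
  assert (S2 := same_sign_of_close _ _ (Hclose j e Hj (or_introl eq_refl))).
  replace (lam j + - e) with (lam j - e) in S1 by ring.
  specialize (Hsign j Hj).
  destruct (Rlt_dec (Q (lam j - e) * Q (lam j + e)) 0) as [|Hge]; [assumption|].
  assert (0 < (Q (lam j - e) * P (lam j - e)) * (Q (lam j + e) * P (lam j + e)))
    by (apply Rmult_lt_0_compat; assumption).
  nra.
Qed.

Section ZerosContinuity.
Variables (N : nat) (phit : R -> nat -> R -> R) (lamN : R -> nat -> R) (a C d1 : R).
Hypotheses (Ha : -1 < a < 1)
  (Hphit : forall b, -1 < b < 1 -> forall j, monic_orth_poly (omegat b) j (phit b j))
  (HlamN : forall b, -1 < b < 1 -> sorted_zeros (phit b (S N)) N (lamN b))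
  (Hd1 : 0 < d1) (HC : 0 <= C)
  (Hlip : forall b x, 0 < Rabs (b - a) < d1 -> -1 <= x <= 1 ->
     Rabs (phit b (S N) x - phit a (S N) x) <= C * Rabs (b - a)).

Let lam := lamN a.
Let P := phit a (S N).
Let P_orth : monic_orth_poly (omegat a) (S N) P := Hphit a Ha (S N).
Let P_zeros : sorted_zeros P N lam := HlamN a Ha.
Let lam_incr : increasing_upto lam N := proj1 P_zeros.

Lemma orth_sign_change_near_zeros g e :
  (forall i j, (i <= N)%nat -> (j <= N)%nat -> i <> j -> g <= Rabs (lam i - lam j)) ->
  0 < e < g / 2 -> forall i, (i <= N)%nat -> P (lam i - e) * P (lam i + e) < 0.
Proof.
  intros Hgap He i Hi.
  destruct (lagrange_num_factor lam N lam_incr P (proj1 P_orth) P_zeros i Hi) as [_ El].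
  rewrite !El. replace (lam i - e - lam i) with (- e) by ring. replace (lam i + e - lam i) with e by ring.
  assert (0 < lagrange_num lam N i (lam i - e) * lagrange_num lam N i (lam i + e)).
  { apply (lagrange_num_same_sign lam N i g); auto.
    - replace (lam i - e - lam i) with (- e) by ring. rewrite Rabs_Ropp, Rabs_right; lra.
    - replace (lam i + e - lam i) with e by ring. rewrite Rabs_right; lra. }
  assert (0 < e * e) by nra. nra.
Qed.

Lemma orth_zeros_continuous k : (k <= N)%nat -> forall e, 0 < e ->
  exists d, 0 < d /\ forall b, 0 < Rabs (b - a) < d -> Rabs (lamN b k - lamN a k) < e.
Proof.
  intros Hk e He.
  destruct (increasing_min_gap lam N lam_incr) as [g [Hg Hgap]].
  assert (Hin := zeros_inside a N P lam Ha P_orth P_zeros).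
  set (m1 := Rmin (lam 0%nat + 1) (1 - lam N)).
  assert (Hm1 : 0 < m1)
    by (unfold m1; pose proof (Hin 0%nat ltac:(lia)); pose proof (Hin N ltac:(lia)); apply Rmin_pos; lra).
  assert (Hrange : forall i, (i <= N)%nat -> lam 0%nat <= lam i <= lam N)
    by (intros i Hi; split; apply (increasing_le lam N lam_incr); lia).
  set (e' := Rmin e (Rmin (g / 4) (m1 / 2))).
  assert (He' : 0 < e') by (unfold e'; repeat apply Rmin_pos; lra).
  assert (He'e : e' <= e) by apply Rmin_l.
  assert (He'g : e' <= g / 4) by (eapply Rle_trans; [apply Rmin_r|apply Rmin_l]).
  assert (He'm : e' <= m1 / 2) by (eapply Rle_trans; [apply Rmin_r|apply Rmin_r]).
  assert (Hm1a : m1 <= lam 0%nat + 1) by apply Rmin_l.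
  assert (Hm1b : m1 <= 1 - lam N) by apply Rmin_r.
  assert (Hsign := orth_sign_change_near_zeros g e' Hgap ltac:(lra)).
  destruct (finite_pos_lower_bound N (fun i => Rmin (Rabs (P (lam i - e'))) (Rabs (P (lam i + e')))))
    as [m [Hm Hm']].
  { intros i Hi. specialize (Hsign i Hi).
    apply Rmin_pos; apply Rabs_pos_lt; intros E; rewrite E in Hsign; lra. }
  assert (Ha1 : 0 < (1 - Rabs a) / 2) by (assert (Rabs a < 1) by (apply Rabs_def1; lra); lra).
  exists (Rmin (Rmin d1 ((1 - Rabs a) / 2)) (m / (C + 1))).
  split; [repeat apply Rmin_pos; try apply Rdiv_lt_0_compat; lra|].
  intros b Hb.
  assert (Hb1 : Rabs (b - a) < d1 /\ Rabs (b - a) < (1 - Rabs a) / 2 /\ Rabs (b - a) < m / (C + 1)).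
  { repeat split; eapply Rlt_le_trans; try apply Hb;
      [eapply Rle_trans; apply Rmin_l|eapply Rle_trans; [apply Rmin_l|apply Rmin_r]|apply Rmin_r]. }
  destruct Hb1 as [Hb1 [Hb2 Hb3]].
  destruct (param_near a b Ha Hb2) as [Hbin _].
  assert (Cm : C * Rabs (b - a) < m).
  { eapply Rle_lt_trans; [|apply (mul_frac_lt C m); lra]. apply Rmult_le_compat_l; lra. }
  apply Rlt_le_trans with e'; [|exact He'e].
  apply (zeros_perturbation P (phit b (S N)) (S (S N)) N lam (lamN b) e' He'
           (monic_deg_lt _ _ (proj1 (Hphit b Hbin (S N)))) (HlamN b Hbin)); [| |intros i s Hi Hs|exact Hk].
  - intros i Hi. assert (G := Hgap (S i) i ltac:(lia) ltac:(lia) ltac:(lia)).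
    assert (lam i < lam (S i)) by (apply lam_incr; auto). rewrite Rabs_right in G by lra. lra.
  - exact Hsign.
  - specialize (Hm' i Hi). specialize (Hrange i Hi). simpl in Hm'.
    assert (Hs' : m <= Rabs (P (lam i + s))).
    { destruct Hs as [->| ->]; [eapply Rle_trans; [exact Hm'|apply Rmin_r]|].
      replace (lam i + - e') with (lam i - e') by ring. eapply Rle_trans; [exact Hm'|apply Rmin_l]. }
    eapply Rle_lt_trans; [apply Hlip; [split; [apply Hb|exact Hb1]|]|lra].
    destruct Hs as [-> | ->]; lra.
Qed.

End ZerosContinuity.

(* Implicit differentiation of [phit b (N + 1) (lamN b k) = 0], using [P'(lam k) = l (lam k)]. *)
Lemma orth_zeros_derivative_neg N (phit : R -> nat -> R -> R) (lamN : R -> nat -> R) a k :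
  -1 < a < 1 ->
  (forall b, -1 < b < 1 -> forall j, monic_orth_poly (omegat b) j (phit b j)) ->
  (forall b, -1 < b < 1 -> sorted_zeros (phit b (S N)) N (lamN b)) ->
  (k <= N)%nat -> exists l, derivable_pt_lim (fun b => lamN b k) a l /\ l < 0.
Proof.
  intros Ha Hphit HlamN Hk.
  destruct (diffquot_uniform a N phit Ha Hphit) as [d1 [C [Hd1 [HC Happ]]]].
  set (P := phit a (S N)). set (lam := lamN a).
  assert (P_orth : monic_orth_poly (omegat a) (S N) P) by apply Hphit, Ha.
  assert (P_zeros : sorted_zeros P N lam) by apply HlamN, Ha.
  destruct (lagrange_num_factor lam N (proj1 P_zeros) P (proj1 P_orth) P_zeros k Hk) as [Hl El].
  set (l := lagrange_num lam N k) in *.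
  assert (Hx0 := zeros_inside a N P lam Ha P_orth P_zeros k Hk).
  assert (Sg := param_deriv_sign_at_zero a N phit Ha Hphit l (lam k) Hl El Hx0).
  assert (Hl0 : l (lam k) <> 0) by (intros E; rewrite E in Sg; lra).
  assert (Ha1 : 0 < (1 - Rabs a) / 2) by (assert (Rabs a < 1) by (apply Rabs_def1; lra); lra).
  set (d := Rmin d1 ((1 - Rabs a) / 2)).
  assert (Hd : 0 < d) by (apply Rmin_pos; lra).
  assert (Hbd : forall b, 0 < Rabs (b - a) < d -> 0 < Rabs (b - a) < d1 /\ -1 < b < 1).
  { intros b Hb. split; [split; [apply Hb|eapply Rlt_le_trans; [apply Hb|apply Rmin_l]]|].
    apply (param_near a b Ha). eapply Rlt_le_trans; [apply Hb|apply Rmin_r]. }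
  destruct (deg_lt_lipschitz (S N) _ (lam k) (deg_lt_param_deriv a N phit Ha Hphit)) as [L1 [HL1 Lip1]].
  destruct (deg_lt_lipschitz (S N) l (lam k) (monic_deg_lt _ _ Hl)) as [L2 [HL2 Lip2]].
  exists (- (param_deriv a N phit (lam k) / l (lam k))). split.
  - apply (derivable_pt_lim_implicit (fun b => lamN b k) a (diffquot a N phit) (param_deriv a N phit) l
             C d L1 L2); auto.
    + apply (orth_zeros_continuous N phit lamN a C d1 Ha Hphit HlamN Hd1 HC); [|exact Hk].
      intros b x Hb Hx. destruct (Happ b Hb x Hx) as [_ Hq].
      assert (b - a <> 0) by (intros E; rewrite E, Rabs_R0 in Hb; lra).
      replace (phit b (S N) x - phit a (S N) x) with ((b - a) * diffquot a N phit b x)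
        by (unfold diffquot; field; auto).
      rewrite Rabs_mult, Rmult_comm. apply Rmult_le_compat_r; [apply Rabs_pos|exact Hq].
    + intros b x Hb Hx. apply Happ; [apply Hbd|]; auto.
    + intros b Hb. destruct (Hbd b Hb) as [Hb1 Hbin].
      assert (b - a <> 0) by (intros E; rewrite E, Rabs_R0 in Hb1; lra).
      assert (Z : phit b (S N) (lamN b k) = 0) by (apply HlamN; auto).
      fold lam. rewrite <- El. unfold diffquot. rewrite Z. fold P. field. auto.
  - assert (0 < param_deriv a N phit (lam k) / l (lam k)); [|lra].
    replace (param_deriv a N phit (lam k) / l (lam k))
      with ((param_deriv a N phit (lam k) * l (lam k)) / (l (lam k) * l (lam k))) by (field; auto).
    apply Rdiv_lt_0_compat; [exact Sg|]. destruct (Rlt_dec 0 (l (lam k))); nra.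
Qed.

Theorem mainTheorem6 (N : nat) (HN : (1 <= N)%nat)
  (phi phit : R -> nat -> R -> R) (lamN lamN1 : R -> nat -> R)
  (Hphi : forall a, -1 < a < 1 -> forall k, monic_orth_poly (omega a) k (phi a k))
  (Hphit : forall a, -1 < a < 1 -> forall k, monic_orth_poly (omegat a) k (phit a k))
  (HlamN : forall a, -1 < a < 1 -> sorted_zeros (phit a (S N)) N (lamN a))
  (HlamN1 : forall a, -1 < a < 1 -> sorted_zeros (phit a N) (N - 1) (lamN1 a)) :
  (forall k : nat, (k <= N)%nat -> forall a, -1 < a < 1 ->
     exists l : R, derivable_pt_lim (fun b => lamN b k) a l /\ l < 0) /\
  (forall a, -1 < a < 1 -> forall k : nat, (k <= N - 1)%nat ->
     lamN a k < lamN1 a k < lamN a (S k)) /\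
  (forall a, -1 < a < 1 -> forall A B : R,
     RInt_eq (fun mu => mu * omega a mu) (-1) 1 A ->
     RInt_eq (fun mu => omega a mu) (-1) 1 B ->
     lamN a 0%nat < A / B < lamN a N) /\
  (forall a, -1 < a < 1 -> forall f : nat -> R, f 0%nat <> 0 -> f 1%nat = 0 ->
     forall E0 E1 : R,
     RInt_eq (fun mu => sum_f_R0 (fun i => f i * omega a mu * phi a i mu) N) (-1) 1 E0 ->
     RInt_eq (fun mu => mu * sum_f_R0 (fun i => f i * omega a mu * phi a i mu) N) (-1) 1 E1 ->
     lamN a 0%nat < E1 / E0 < lamN a N).
Proof.
  split; [|split; [|split]].
  - intros k Hk a Ha. exact (orth_zeros_derivative_neg N phit lamN a k Ha Hphit HlamN Hk).
  - intros a Ha. exact (interlacing (omegat a) (cont_pm1_omegat a Ha) (fun x => omegat_pos a x Ha)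
      N _ _ _ _ (Hphit a Ha (S N)) (Hphit a Ha N) (HlamN a Ha) (HlamN1 a Ha) HN).
  - intros a Ha A B HA HB.
    exact (proj2 (ratio_between_extreme_zeros a N _ _ Ha HN (Hphit a Ha (S N)) (HlamN a Ha) A B HA HB)).
  - intros a Ha f Hf0 Hf1 E0 E1 H0 H1.
    destruct (ansatz_moments a N (phi a) f E0 E1 Ha (Hphi a Ha) Hf1 H0 H1) as [-> ->].
    assert (CA : cont_pm1 (fun mu => mu * omega a mu)) by (assert (C := cont_pm1_omega a Ha); cont_pm1_tac).
    destruct (ratio_between_extreme_zeros a N _ _ Ha HN (Hphit a Ha (S N)) (HlamN a Ha) _ _
      (integ_RInt_eq _ CA) (integ_RInt_eq _ (cont_pm1_omega a Ha))) as [Bpos Hr].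
    replace (f 0%nat * integ (fun mu => mu * omega a mu) / (f 0%nat * integ (omega a)))
      with (integ (fun mu => mu * omega a mu) / integ (omega a)) by (field; lra).
    exact Hr.
Qed.
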